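(* Let $U$ be any consistent c.e. theory. Suppose a partial computable function $\Phi$ satisfies: for every natural number $i$, if $\mathsf W_i$ is a consistent finite extension of $U$, then $\Phi(i)$ converges to a sentence, $U\nvdash\Phi(i)$, and $\mathsf W_i\nvdash\neg\Phi(i)$. Then for every index $i$ of $U$ (i.e. $\mathsf W_i=U$) there exists an index $j$ of $U$ (i.e. $\mathsf W_j=U$) such that $U\nvdash\Phi(j)\to\Phi(i)$.
   Context: $\mathsf W_i$ denotes the $i$-th computably enumerable set (of sentences), viewed as a theory. $U$ is viewed as a set of axioms; $\mathsf W_i$ is a finite extension of $U$ if $\mathsf W_i=U\cup F$ for some finite set of sentences $F$. *)

(* Self-contained setting for the statement:
   - first-order classical logic in the language of arithmetic (0, S, +, *, =),
     de Bruijn variables, natural-deduction provability;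
   - an acceptable numbering of partial computable functions phi_i given by
     (codes of) unary mu-recursive programs over Cantor-paired naturals;
   - W_i = the c.e. set of sentences whose Goedel numbers lie in dom(phi_i). *)
From Stdlib Require Import Arith List.
Import ListNotations.

Definition pair (x y : nat) : nat := (x + y) * (x + y + 1) / 2 + y.

Inductive code : Type :=
| cZero | cSucc | cId | cFst | cSnd
| cComp (f g : code)
| cPair (f g : code)
| cRec  (f g : code)
| cMu   (f : code).

Inductive eval : code -> nat -> nat -> Prop :=
| ev_zero x : eval cZero x 0
| ev_succ x : eval cSucc x (S x)
| ev_id x : eval cId x x
| ev_fst a b : eval cFst (pair a b) a
| ev_snd a b : eval cSnd (pair a b) b
| ev_comp f g x y z : eval g x y -> eval f y z -> eval (cComp f g) x z
| ev_pair f g x a b : eval f x a -> eval g x b -> eval (cPair f g) x (pair a b)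
| ev_rec0 f g x y : eval f x y -> eval (cRec f g) (pair x 0) y
| ev_recS f g x n y z : eval (cRec f g) (pair x n) y ->
    eval g (pair x (pair n y)) z -> eval (cRec f g) (pair x (S n)) z
| ev_mu f x n : eval f (pair x n) 0 ->
    (forall m, m < n -> exists v, v <> 0 /\ eval f (pair x m) v) ->
    eval (cMu f) x n.

Fixpoint encode (c : code) : nat :=
  match c with
  | cZero => pair 0 0
  | cSucc => pair 1 0
  | cId => pair 2 0
  | cFst => pair 3 0
  | cSnd => pair 4 0
  | cComp f g => pair 5 (pair (encode f) (encode g))
  | cPair f g => pair 6 (pair (encode f) (encode g))
  | cRec f g => pair 7 (pair (encode f) (encode g))
  | cMu f => pair 8 (encode f)
  end.

(* phi_i(x) converges to y.  Indices that code no program denote the empty function. *)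
Definition phi (i x y : nat) : Prop := exists c, encode c = i /\ eval c x y.

Inductive term : Type :=
| var (n : nat) | zero | succ (t : term) | plus (s t : term) | mult (s t : term).

Inductive form : Type :=
| fal | eqf (s t : term) | imp (A B : form) | all (A : form).

Definition neg (A : form) : form := imp A fal.

Fixpoint tsubst (s : nat -> term) (t : term) : term :=
  match t with
  | var n => s n
  | zero => zero
  | succ t => succ (tsubst s t)
  | plus a b => plus (tsubst s a) (tsubst s b)
  | mult a b => mult (tsubst s a) (tsubst s b)
  end.

Definition tshift (t : term) : term := tsubst (fun n => var (S n)) t.

Definition up (s : nat -> term) : nat -> term :=
  fun n => match n with 0 => var 0 | S m => tshift (s m) end.

Fixpoint fsubst (s : nat -> term) (A : form) : form :=
  match A with
  | fal => fal
  | eqf a b => eqf (tsubst s a) (tsubst s b)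
  | imp A B => imp (fsubst s A) (fsubst s B)
  | all A => all (fsubst (up s) A)
  end.

Definition fshift (A : form) : form := fsubst (fun n => var (S n)) A.

Definition inst (A : form) (t : term) : form :=
  fsubst (fun n => match n with 0 => t | S m => var m end) A.

Fixpoint tclosed (k : nat) (t : term) : bool :=
  match t with
  | var n => Nat.ltb n k
  | zero => true
  | succ t => tclosed k t
  | plus a b | mult a b => tclosed k a && tclosed k b
  end.

Fixpoint fclosed (k : nat) (A : form) : bool :=
  match A with
  | fal => true
  | eqf a b => tclosed k a && tclosed k b
  | imp A B => fclosed k A && fclosed k B
  | all A => fclosed (S k) A
  end.

Definition sentence (A : form) : Prop := fclosed 0 A = true.

Inductive nd : list form -> form -> Prop :=
| nd_ax G A : In A G -> nd G A
| nd_impI G A B : nd (A :: G) B -> nd G (imp A B)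
| nd_impE G A B : nd G (imp A B) -> nd G A -> nd G B
| nd_allI G A : nd (map fshift G) A -> nd G (all A)
| nd_allE G A t : nd G (all A) -> nd G (inst A t)
| nd_raa G A : nd (neg A :: G) fal -> nd G A
| nd_refl G t : nd G (eqf t t)
| nd_eqE G A s t : nd G (eqf s t) -> nd G (inst A s) -> nd G (inst A t).

Definition theory := form -> Prop.

Definition Provable (T : theory) (A : form) : Prop :=
  exists G, (forall B, In B G -> T B) /\ nd G A.

Definition Consistent (T : theory) : Prop := ~ Provable T fal.

Fixpoint tcode (t : term) : nat :=
  match t with
  | var n => pair 0 n
  | zero => pair 1 0
  | succ t => pair 2 (tcode t)
  | plus a b => pair 3 (pair (tcode a) (tcode b))
  | mult a b => pair 4 (pair (tcode a) (tcode b))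
  end.

Fixpoint fcode (A : form) : nat :=
  match A with
  | fal => pair 0 0
  | eqf a b => pair 1 (pair (tcode a) (tcode b))
  | imp A B => pair 2 (pair (fcode A) (fcode B))
  | all A => pair 3 (fcode A)
  end.

Definition W (i : nat) : theory :=
  fun A => sentence A /\ exists y, phi i (fcode A) y.

Definition same_theory (T S : theory) : Prop := forall A, T A <-> S A.

Definition finite_extension (T U : theory) : Prop :=
  exists F : list form, (forall A, In A F -> sentence A) /\
    forall A, T A <-> (U A \/ In A F).

Definition PhiVal (p i : nat) (A : form) : Prop :=
  sentence A /\ phi p i (fcode A).

From Stdlib Require Import Arith List Lia Bool Classical.
Import ListNotations.

(* Let A := Phi(i).  By Kleene's recursion theorem there is an index j with
     W_j = (U \ {~A}) + {~A | U |- Phi(j) -> A},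
   a c.e. theory since provability from U is c.e.  If U |- Phi(j) -> A, then W_j = U + ~A is a
   finite extension of U, consistent because U does not prove A, and it proves ~Phi(j),
   contradicting the hypothesis on Phi at j.  So U does not prove Phi(j) -> A, and then
   W_j = U, because ~A is not in U (W_i = U does not prove ~A).

   To apply the recursion theorem, evaluation of programs, the syntactic operations and
   natural deduction are arithmetized as a single calculus of coded judgments with decidable
   axioms and rules; W_j is enumerated by a program searching for derivations in it. *)

(** * Cantor pairing *)

Arguments pair : simpl never.

Fixpoint tri n := match n with 0 => 0 | S n => tri n + S n end.
Lemma tri_double n : 2 * tri n = n * (n + 1).
Proof. induction n; simpl tri; nia. Qed.
Lemma pair_tri a b : pair a b = tri (a + b) + b.
Proof.
  unfold pair. f_equal. rewrite <- tri_double. rewrite Nat.mul_comm. apply Nat.div_mul. lia.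
Qed.
Lemma tri_mono m n : m <= n -> tri m <= tri n.
Proof. induction 1; simpl; lia. Qed.
Lemma pair_inj a b c d : pair a b = pair c d -> a = c /\ b = d.
Proof.
  rewrite !pair_tri. intro H.
  destruct (lt_eq_lt_dec (a+b) (c+d)) as [[Hl|He]|Hl].
  - assert (tri (S (a+b)) <= tri (c+d)) by (apply tri_mono; lia). simpl in H0. lia.
  - rewrite He in H. lia.
  - assert (tri (S (c+d)) <= tri (a+b)) by (apply tri_mono; lia). simpl in H0. lia.
Qed.
(* [unpair z] is the [z]-th pair along the antidiagonals, the order in which [pair] numbers
   them. *)
Definition unpair_step (p : nat * nat) := match p with (0, b) => (S b, 0) | (S a, b) => (a, S b) end.
Definition unpair z := Nat.iter z unpair_step (0,0).
Definition pi1 z := fst (unpair z).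
Definition pi2 z := snd (unpair z).
Lemma pair_pi z : pair (pi1 z) (pi2 z) = z.
Proof.
  unfold pi1, pi2. induction z.
  - reflexivity.
  - unfold unpair in *. simpl Nat.iter. destruct (Nat.iter z unpair_step (0,0)) as [a b]. simpl in *.
    destruct a; simpl; rewrite !pair_tri in *; rewrite ?Nat.add_0_r, ?Nat.add_succ_r in *; simpl in *; lia.
Qed.
Lemma pi1_pair a b : pi1 (pair a b) = a.
Proof. pose proof (pair_pi (pair a b)). apply pair_inj in H. tauto. Qed.
Lemma pi2_pair a b : pi2 (pair a b) = b.
Proof. pose proof (pair_pi (pair a b)). apply pair_inj in H. tauto. Qed.
Global Opaque pi1 pi2.

Ltac simpl_pi := repeat (rewrite pi1_pair || rewrite pi2_pair).

(** * Computable functions *)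

Definition computable (f : nat -> nat) := exists c, forall x, eval c x (f x).
Definition computableb (P : nat -> bool) := computable (fun z => Nat.b2n (P z)).
Definition computable2 (h : nat -> nat -> nat) := computable (fun z => h (pi1 z) (pi2 z)).

Lemma computable_ext f g : (forall x, f x = g x) -> computable f -> computable g.
Proof. intros H [c Hc]. exists c. intro x. rewrite <- H. apply Hc. Qed.
Lemma computable_id : computable (fun z => z).
Proof. exists cId. intro; constructor. Qed.
Lemma computable_comp h f : computable h -> computable f -> computable (fun x => h (f x)).
Proof. intros [ch Hh] [cf Hf]. exists (cComp ch cf). intro x. econstructor; eauto. Qed.
Lemma computable_S : computable S.
Proof. exists cSucc. intro; constructor. Qed.
Lemma computable_pi1 : computable pi1.
Proof. exists cFst. intro x. rewrite <- (pair_pi x) at 1. constructor. Qed.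
Lemma computable_pi2 : computable pi2.
Proof. exists cSnd. intro x. rewrite <- (pair_pi x) at 1. constructor. Qed.
Lemma computable_pair f g : computable f -> computable g -> computable (fun x => pair (f x) (g x)).
Proof. intros [cf Hf] [cg Hg]. exists (cPair cf cg). intro x. constructor; auto. Qed.
Lemma computable_const n : computable (fun _ => n).
Proof.
  induction n.
  - exists cZero. intro; constructor.
  - apply (computable_comp S (fun _ => n)); auto using computable_S.
Qed.

Fixpoint prim_rec (f g : nat -> nat) (x n : nat) : nat :=
  match n with 0 => f x | S n => g (pair x (pair n (prim_rec f g x n))) end.
Lemma computable_prim_rec f g : computable f -> computable g ->
  computable (fun z => prim_rec f g (pi1 z) (pi2 z)).
Proof.
  intros [cf Hf] [cg Hg]. exists (cRec cf cg). intro z.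
  rewrite <- (pair_pi z) at 1. generalize (pi1 z) (pi2 z). intros x n.
  induction n; simpl.
  - constructor; auto.
  - econstructor; eauto.
Qed.

Lemma computable_app2 h f g : computable2 h -> computable f -> computable g ->
  computable (fun x => h (f x) (g x)).
Proof.
  intros H Hf Hg. eapply computable_ext; [|apply (computable_comp _ _ H (computable_pair f g Hf Hg))].
  intro; simpl. rewrite pi1_pair, pi2_pair. reflexivity.
Qed.

Lemma computable2_pair : computable2 pair.
Proof. unfold computable2. eapply computable_ext; [|apply computable_id]. intro. apply eq_sym, pair_pi. Qed.

Lemma computable2_add : computable2 Nat.add.
Proof.
  unfold computable2. eapply computable_ext; [|apply (computable_prim_rec (fun x => x) (fun w => S (pi2 (pi2 w))))].
  - intro z. cbv beta. generalize (pi1 z) (pi2 z). intros x n. induction n; simpl; simpl_pi; lia.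
  - apply computable_id.
  - apply (computable_comp S); [apply computable_S|].
    apply (computable_comp pi2); [apply computable_pi2|]. apply computable_pi2.
Qed.
Lemma computable_add f g : computable f -> computable g -> computable (fun x => f x + g x).
Proof. apply computable_app2, computable2_add. Qed.

Lemma computable2_mul : computable2 Nat.mul.
Proof.
  unfold computable2. eapply computable_ext; [|apply (computable_prim_rec (fun x => 0) (fun w => pi1 w + pi2 (pi2 w)))].
  - intro z. cbv beta. generalize (pi1 z) (pi2 z). intros x n. induction n; simpl; simpl_pi; lia.
  - apply computable_const.
  - apply computable_add. apply computable_pi1.
    apply (computable_comp pi2); [apply computable_pi2|]. apply computable_pi2.
Qed.
Lemma computable_mul f g : computable f -> computable g -> computable (fun x => f x * g x).
Proof. apply computable_app2, computable2_mul. Qed.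

Lemma computable_pred : computable Nat.pred.
Proof.
  assert (H : computable (fun z => prim_rec (fun _ => 0) (fun w => pi1 (pi2 w)) (pi1 z) (pi2 z))).
  { apply computable_prim_rec. apply computable_const.
    apply (computable_comp pi1); [apply computable_pi1|apply computable_pi2]. }
  eapply computable_ext; [|apply (computable_comp _ (fun z => pair 0 z) H)].
  - intro z. cbv beta. rewrite pi1_pair, pi2_pair. destruct z; simpl; simpl_pi; auto.
  - apply computable_pair. apply computable_const. apply computable_id.
Qed.

Lemma computable2_sub : computable2 Nat.sub.
Proof.
  unfold computable2. eapply computable_ext; [|apply (computable_prim_rec (fun x => x) (fun w => Nat.pred (pi2 (pi2 w))))].
  - intro z. cbv beta. generalize (pi1 z) (pi2 z). intros x n. induction n; simpl; simpl_pi; lia.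
  - apply computable_id.
  - apply (computable_comp Nat.pred); [apply computable_pred|].
    apply (computable_comp pi2); [apply computable_pi2|apply computable_pi2].
Qed.
Lemma computable_sub f g : computable f -> computable g -> computable (fun x => f x - g x).
Proof. apply computable_app2, computable2_sub. Qed.

Lemma computableb_eqb f g : computable f -> computable g -> computableb (fun x => f x =? g x).
Proof.
  intros. unfold computableb. eapply computable_ext with (f := fun x => 1 - ((f x - g x) + (g x - f x))).
  - intro x. unfold Nat.b2n. destruct (Nat.eqb_spec (f x) (g x)); lia.
  - apply computable_sub. apply computable_const. apply computable_add; apply computable_sub; auto.
Qed.
Lemma computableb_ltb f g : computable f -> computable g -> computableb (fun x => f x <? g x).
Proof.
  intros. unfold computableb. eapply computable_ext with (f := fun x => 1 - (S (f x) - g x)).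
  - intro x. unfold Nat.b2n. destruct (Nat.ltb_spec (f x) (g x)); lia.
  - apply computable_sub. apply computable_const. apply computable_sub; auto.
    apply (computable_comp S); auto. apply computable_S.
Qed.
Lemma computableb_andb P Q : computableb P -> computableb Q -> computableb (fun x => P x && Q x).
Proof.
  intros. unfold computableb. eapply computable_ext with (f := fun x => Nat.b2n (P x) * Nat.b2n (Q x)).
  - intro x. unfold Nat.b2n. destruct (P x), (Q x); reflexivity.
  - apply computable_mul; auto.
Qed.
Lemma computableb_negb P : computableb P -> computableb (fun x => negb (P x)).
Proof.
  intros. unfold computableb. eapply computable_ext with (f := fun x => 1 - Nat.b2n (P x)).
  - intro x. unfold Nat.b2n. destruct (P x); reflexivity.
  - apply computable_sub; auto. apply computable_const.
Qed.
Lemma computableb_orb P Q : computableb P -> computableb Q -> computableb (fun x => P x || Q x).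
Proof.
  intros. unfold computableb. eapply computable_ext with (f := fun x => 1 - (1 - Nat.b2n (P x)) * (1 - Nat.b2n (Q x))).
  - intro x. unfold Nat.b2n. destruct (P x), (Q x); reflexivity.
  - apply computable_sub. apply computable_const.
    apply computable_mul; apply computable_sub; auto; apply computable_const.
Qed.
Lemma computable_if P f g : computableb P -> computable f -> computable g ->
  computable (fun x => if P x then f x else g x).
Proof.
  intros. eapply computable_ext with (f := fun x => Nat.b2n (P x) * f x + (1 - Nat.b2n (P x)) * g x).
  - intro x. unfold Nat.b2n. destruct (P x); lia.
  - apply computable_add; apply computable_mul; auto. apply computable_sub; auto. apply computable_const.
Qed.
Lemma computableb_comp P f : computableb P -> computable f -> computableb (fun z => P (f z)).
Proof. intros. unfold computableb in *. apply (computable_comp (fun z => Nat.b2n (P z)) f); auto. Qed.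

Lemma computableb_const b : computableb (fun _ => b).
Proof. unfold computableb. apply (computable_const (Nat.b2n b)). Qed.

Fixpoint bexists (k : nat) (P : nat -> bool) : bool :=
  match k with 0 => false | S k => P k || bexists k P end.
Definition bforall k P := negb (bexists k (fun m => negb (P m))).

Lemma computableb_bexists (k : nat -> nat) (P : nat -> nat -> bool) :
  computable k -> computableb (fun y => P (pi1 y) (pi2 y)) -> computableb (fun z => bexists (k z) (P z)).
Proof.
  intros Hk HP.
  assert (Hg : computable (fun w => Nat.b2n (P (pi1 w) (pi1 (pi2 w)) || (pi2 (pi2 w) =? 1)))).
  { apply computableb_orb.
    - eapply computable_ext; [|apply (computable_comp _ (fun w => pair (pi1 w) (pi1 (pi2 w))) HP)].
      + intro; simpl. rewrite pi1_pair, pi2_pair. reflexivity.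
      + apply computable_pair. apply computable_pi1. apply (computable_comp pi1).
        apply computable_pi1. apply computable_pi2.
    - apply computableb_eqb. apply (computable_comp pi2). apply computable_pi2.
      apply computable_pi2. apply computable_const. }
  pose proof (computable_prim_rec (fun _ => 0) _ (computable_const 0) Hg) as H.
  unfold computableb. eapply computable_ext; [|apply (computable_comp _ (fun z => pair z (k z)) H)].
  - intro z. cbv beta. rewrite pi1_pair, pi2_pair. generalize (k z). intro n. induction n; simpl; auto.
    simpl_pi. rewrite IHn. unfold Nat.b2n. destruct (P z n), (bexists n (P z)); reflexivity.
  - apply computable_pair; auto. apply computable_id.
Qed.
Lemma computableb_bforall (k : nat -> nat) (P : nat -> nat -> bool) :
  computable k -> computableb (fun y => P (pi1 y) (pi2 y)) -> computableb (fun z => bforall (k z) (P z)).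
Proof.
  intros. unfold bforall. apply computableb_negb. apply (computableb_bexists k (fun z m => negb (P z m))); auto.
  apply computableb_negb; auto.
Qed.

Lemma computable_iter (k s : nat -> nat) (F : nat -> nat) :
  computable F -> computable k -> computable s -> computable (fun z => Nat.iter (k z) F (s z)).
Proof.
  intros HF Hk Hs.
  assert (Hg : computable (fun w => F (pi2 (pi2 w)))).
  { apply (computable_comp F); auto. apply (computable_comp pi2). apply computable_pi2.
    apply computable_pi2. }
  pose proof (computable_prim_rec (fun x => x) (fun w => F (pi2 (pi2 w))) computable_id Hg) as H.
  eapply computable_ext; [|apply (computable_comp _ (fun z => pair (s z) (k z)) H)].
  - intro z. cbv beta. rewrite pi1_pair, pi2_pair. generalize (k z). intro n. induction n; simpl; auto.
    simpl_pi. rewrite IHn. reflexivity.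
  - apply computable_pair; auto.
Qed.

Ltac computable_step :=
  match goal with
  | |- computable (fun _ => ?c) => apply computable_const
  | |- computableb (fun _ => ?c) => apply computableb_const
  | |- computable (fun z => z) => apply computable_id
  | |- computable (fun z => pair (@?f z) (@?g z)) => apply (computable_app2 pair f g computable2_pair)
  | |- computable (fun z => pi1 (@?f z)) => apply (computable_comp pi1 f computable_pi1)
  | |- computable (fun z => pi2 (@?f z)) => apply (computable_comp pi2 f computable_pi2)
  | |- computable (fun z => S (@?f z)) => apply (computable_comp S f computable_S)
  | |- computable (fun z => Nat.pred (@?f z)) => apply (computable_comp Nat.pred f computable_pred)
  | |- computable (fun z => Nat.add (@?f z) (@?g z)) => apply (computable_add f g)
  | |- computable (fun z => Nat.mul (@?f z) (@?g z)) => apply (computable_mul f g)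
  | |- computable (fun z => Nat.sub (@?f z) (@?g z)) => apply (computable_sub f g)
  | |- computable (fun z => Nat.b2n (@?P z)) => change (computableb P)
  | |- computable (fun z => if @?P z then @?f z else @?g z) => apply (computable_if P f g)
  | |- computable (fun z => Nat.iter (@?k z) ?F (@?s z)) => apply (computable_iter k s F)
  | |- computableb (fun z => Nat.eqb (@?f z) (@?g z)) => apply (computableb_eqb f g)
  | |- computableb (fun z => Nat.ltb (@?f z) (@?g z)) => apply (computableb_ltb f g)
  | |- computableb (fun z => andb (@?P z) (@?Q z)) => apply (computableb_andb P Q)
  | |- computableb (fun z => orb (@?P z) (@?Q z)) => apply (computableb_orb P Q)
  | |- computableb (fun z => negb (@?P z)) => apply (computableb_negb P)
  | |- computableb (fun z => bexists (@?k z) (@?P z)) => apply (computableb_bexists k P); cbv beta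
  | |- computableb (fun z => bforall (@?k z) (@?P z)) => apply (computableb_bforall k P); cbv beta
  | |- computable (fun z => (fun y => @?F y) z) => cbv beta
  end.
Ltac computable_auto := repeat computable_step.

Ltac inv_pair := repeat match goal with
  | H : pair _ _ = pair _ _ |- _ => apply pair_inj in H; destruct H; subst
  end.

Lemma eval_rec_det f g (IHf : forall x y y', eval f x y -> eval f x y' -> y = y')
  (IHg : forall x y y', eval g x y -> eval g x y' -> y = y') :
  forall n x y y', eval (cRec f g) (pair x n) y -> eval (cRec f g) (pair x n) y' -> y = y'.
Proof.
  induction n; intros x y y' H1 H2; inversion H1; subst; inversion H2; subst; inv_pair; try lia; eauto.
  repeat match goal with H : S _ = S _ |- _ => injection H as -> end.
  assert (y0 = y1) by eauto. subst. eauto.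
Qed.

Lemma eval_det c : forall x y y', eval c x y -> eval c x y' -> y = y'.
Proof.
  induction c; intros x y y' H1 H2.
  8: { inversion H1; subst; eapply (eval_rec_det c1 c2 IHc1 IHc2); eauto. }
  all: inversion H1; subst; inversion H2; subst; inv_pair; auto.
  - assert (y0 = y1) by eauto. subst. eauto.
  - f_equal; eauto.
  - (* two minimal zeros of the same function coincide *)
    destruct (lt_eq_lt_dec y y') as [[Hl|He]|Hl]; auto;
    match goal with Hl : ?a < ?b, H : forall m, m < ?b -> _ |- _ => destruct (H a Hl) as [v [Hv Hev]] end;
    assert (v = 0) by eauto; contradiction.
Qed.

Lemma encode_inj c : forall c', encode c = encode c' -> c = c'.
Proof. induction c; destruct c'; simpl; intro H; inv_pair; try discriminate; f_equal; auto. Qed.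

Lemma tcode_inj t : forall t', tcode t = tcode t' -> t = t'.
Proof. induction t; destruct t'; simpl; intro H; inv_pair; try discriminate; f_equal; auto. Qed.

Lemma fcode_inj A : forall A', fcode A = fcode A' -> A = A'.
Proof.
  induction A; destruct A'; simpl; intro H; inv_pair; try discriminate; f_equal; auto using tcode_inj.
Qed.

Lemma phi_functional i x y y' : phi i x y -> phi i x y' -> y = y'.
Proof.
  intros [c [Hc H]] [c' [Hc' H']]. subst. apply encode_inj in Hc'. subst. eapply eval_det; eauto.
Qed.

(** * Inductively generated sets are c.e. *)

Lemma bexists_spec k P : bexists k P = true <-> exists m, m < k /\ P m = true.
Proof.
  induction k; simpl.
  - split; [discriminate|]. intros [m [Hm _]]; lia.
  - rewrite orb_true_iff, IHk. split.
    + intros [H|[m [Hm H]]]; [exists k|exists m]; split; auto; lia.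
    + intros [m [Hm H]]. destruct (Nat.eq_dec m k); [subst; auto|right; exists m; split; auto; lia].
Qed.
Lemma bforall_spec k P : bforall k P = true <-> forall m, m < k -> P m = true.
Proof.
  unfold bforall. rewrite negb_true_iff. split.
  - intros H m Hm. destruct (P m) eqn:E; auto.
    assert (bexists k (fun m => negb (P m)) = true) by (apply bexists_spec; exists m; rewrite E; auto). congruence.
  - intros H. destruct (bexists k _) eqn:E; auto. apply bexists_spec in E. destruct E as [m [Hm E]].
    rewrite H in E; [discriminate|auto].
Qed.

Fixpoint code_list (l : list nat) : nat := match l with [] => 0 | a :: l => S (pair a (code_list l)) end.
Definition nth_code m c := pi1 (Nat.pred (Nat.iter m (fun c => pi2 (Nat.pred c)) c)).
Lemma nth_code_list l : forall m, m < length l -> nth_code m (code_list l) = nth m l 0.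
Proof.
  induction l; simpl; intros m Hm; [lia|]. destruct m.
  - unfold nth_code. simpl. apply pi1_pair.
  - unfold nth_code in *. rewrite Nat.iter_succ_r. simpl. rewrite pi2_pair. apply IHl. lia.
Qed.

Definition rule_instance f a b c d := pair f (pair a (pair b (pair c d))).

(* A set generated by decidable axioms and decidable rules is c.e.: its elements are those
   occurring in some valid sequence, where every entry is an axiom or follows by a rule from
   earlier entries, and validity of a coded sequence is a bounded check.  Rules have exactly
   four premises; a rule needing fewer ignores the others. *)
Section InductiveGeneration.
Variables (ax rl : nat -> bool).

Inductive Derivable : nat -> Prop :=
| Derivable_axiom f : ax f = true -> Derivable f
| Derivable_rule f a b c d : Derivable a -> Derivable b -> Derivable c -> Derivable d ->
    rl (rule_instance f a b c d) = true -> Derivable f.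

Definition valid_seqb k c := bforall k (fun m => ax (nth_code m c) ||
  bexists m (fun i1 => bexists m (fun i2 => bexists m (fun i3 => bexists m (fun i4 =>
    rl (rule_instance (nth_code m c) (nth_code i1 c) (nth_code i2 c) (nth_code i3 c) (nth_code i4 c))))))).
Definition mem_seqb f k c := bexists k (fun m => nth_code m c =? f).

Lemma valid_seqb_Derivable k c : valid_seqb k c = true -> forall m, m < k -> Derivable (nth_code m c).
Proof.
  intros H m. induction m as [m IH] using (well_founded_induction lt_wf). intro Hm.
  unfold valid_seqb in H. rewrite bforall_spec in H. specialize (H m Hm). apply orb_true_iff in H.
  destruct H as [H|H]; [apply Derivable_axiom; auto|].
  apply bexists_spec in H; destruct H as [i1 [H1 H]].
  apply bexists_spec in H; destruct H as [i2 [H2 H]].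
  apply bexists_spec in H; destruct H as [i3 [H3 H]].
  apply bexists_spec in H; destruct H as [i4 [H4 H]].
  eapply Derivable_rule; [| | | | exact H]; apply IH; lia.
Qed.

Lemma mem_seqb_Derivable f k c : valid_seqb k c = true -> mem_seqb f k c = true -> Derivable f.
Proof.
  intros Hv Hm. apply bexists_spec in Hm. destruct Hm as [m [Hm E]]. apply Nat.eqb_eq in E. subst.
  eapply valid_seqb_Derivable; eauto.
Qed.

Definition valid_seq l := forall m, m < length l -> ax (nth m l 0) = true \/
  exists i1 i2 i3 i4, i1 < m /\ i2 < m /\ i3 < m /\ i4 < m /\
   rl (rule_instance (nth m l 0) (nth i1 l 0) (nth i2 l 0) (nth i3 l 0) (nth i4 l 0)) = true.

Lemma valid_seq_valid_seqb l : valid_seq l -> valid_seqb (length l) (code_list l) = true.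
Proof.
  intro H. unfold valid_seqb. apply bforall_spec. intros m Hm. apply orb_true_iff.
  rewrite nth_code_list by auto.
  destruct (H m Hm) as [E|[i1 [i2 [i3 [i4 [H1 [H2 [H3 [H4 E]]]]]]]]]; [left; auto|right].
  apply bexists_spec; exists i1; split; auto.
  apply bexists_spec; exists i2; split; auto.
  apply bexists_spec; exists i3; split; auto.
  apply bexists_spec; exists i4; split; auto.
  rewrite !nth_code_list by lia. exact E.
Qed.

Lemma mem_seqb_code_list l f : In f l -> mem_seqb f (length l) (code_list l) = true.
Proof.
  intro Hf. apply In_nth with (d := 0) in Hf as [i [Hi E]].
  apply bexists_spec. exists i. split; auto. rewrite nth_code_list by auto. apply Nat.eqb_eq; auto.
Qed.

Lemma valid_seq_app l1 l2 : valid_seq l1 -> valid_seq l2 -> valid_seq (l1 ++ l2).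
Proof.
  intros H1 H2 m Hm. rewrite length_app in Hm. destruct (Nat.lt_ge_cases m (length l1)).
  - rewrite app_nth1 by auto.
    destruct (H1 m H) as [E|[i1 [i2 [i3 [i4 [J1 [J2 [J3 [J4 E]]]]]]]]]; [left; auto|right].
    exists i1, i2, i3, i4. rewrite !app_nth1 by lia. auto.
  - rewrite app_nth2 by auto.
    destruct (H2 (m - length l1)) as [E|[i1 [i2 [i3 [i4 [J1 [J2 [J3 [J4 E]]]]]]]]];
    [lia|left; auto|right].
    exists (i1 + length l1), (i2 + length l1), (i3 + length l1), (i4 + length l1).
    rewrite !app_nth2 by lia. rewrite !Nat.add_sub. repeat split; try lia. exact E.
Qed.

Lemma valid_seq_snoc l f : valid_seq l -> (exists i1 i2 i3 i4, i1 < length l /\ i2 < length l /\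
   i3 < length l /\ i4 < length l /\
   rl (rule_instance f (nth i1 l 0) (nth i2 l 0) (nth i3 l 0) (nth i4 l 0)) = true) -> valid_seq (l ++ [f]).
Proof.
  intros H [i1 [i2 [i3 [i4 [J1 [J2 [J3 [J4 E]]]]]]]] m Hm. rewrite length_app in Hm; simpl in Hm.
  destruct (Nat.lt_ge_cases m (length l)).
  - rewrite app_nth1 by auto.
    destruct (H m H0) as [E'|[k1 [k2 [k3 [k4 [K1 [K2 [K3 [K4 E']]]]]]]]]; [left; auto|right].
    exists k1, k2, k3, k4. rewrite !app_nth1 by lia. auto.
  - assert (m = length l) by lia. subst. right. exists i1, i2, i3, i4.
    rewrite nth_middle. rewrite !app_nth1 by lia. repeat split; auto.
Qed.

Lemma Derivable_valid_seq f : Derivable f -> exists l, valid_seq l /\ In f l.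
Proof.
  induction 1.
  - exists [f]. split; [|simpl; auto]. intros m Hm. simpl in Hm. assert (m = 0) by lia. subst.
    left. exact H.
  - destruct IHDerivable1 as [l1 [V1 I1]], IHDerivable2 as [l2 [V2 I2]], IHDerivable3 as [l3 [V3 I3]], IHDerivable4 as [l4 [V4 I4]].
    set (l := l1 ++ l2 ++ l3 ++ l4).
    assert (Vl : valid_seq l) by (repeat apply valid_seq_app; auto).
    assert (Il : forall x, In x l1 \/ In x l2 \/ In x l3 \/ In x l4 -> exists i, i < length l /\ nth i l 0 = x).
    { intros x Hx. assert (Hx' : In x l) by (unfold l; rewrite !in_app_iff; tauto).
      apply In_nth with (d := 0) in Hx'. destruct Hx' as [i [? ?]]. eauto. }
    destruct (Il a) as [ia [Ja Ea]]; auto.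
    destruct (Il b) as [ib [Jb Eb]]; auto.
    destruct (Il c) as [ic [Jc Ec]]; auto.
    destruct (Il d) as [id [Jd Ed]]; auto.
    exists (l ++ [f]). split; [|rewrite in_app_iff; simpl; auto].
    apply valid_seq_snoc; auto. exists ia, ib, ic, id. subst. auto 10.
Qed.

Lemma Derivable_common_seq fs : (forall f, In f fs -> Derivable f) -> exists l, valid_seq l /\ incl fs l.
Proof.
  induction fs as [|f fs IH]; intro H.
  - exists []. split; [intros m Hm; simpl in Hm; lia|intros x []].
  - destruct (Derivable_valid_seq f) as [l1 [V1 I1]]; [apply H; simpl; auto|].
    destruct IH as [l2 [V2 I2]]; [intros; apply H; simpl; auto|].
    exists (l1 ++ l2). split; [apply valid_seq_app; auto|].
    intros x [<-|Hx]; apply in_app_iff; auto.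
Qed.

End InductiveGeneration.

(** * Judgments about programs, syntax and derivations *)

(* [subst_var d 0 U] shifts the variables [>= d] up by one; for [k <> 0], [subst_var d k U]
   replaces variable [d] by [U] and lowers the variables above it.  Both families are stable
   under [up], so one judgment covers [fshift] and [inst]. *)
Definition subst_var d k (U : term) n := if n <? d then var n else if k =? 0 then var (S n)
   else if n =? d then U else var (Nat.pred n).

Lemma tsubst_ext s s' t : (forall n, s n = s' n) -> tsubst s t = tsubst s' t.
Proof. intro H; induction t; simpl; f_equal; auto. Qed.
Lemma up_ext s s' : (forall n, s n = s' n) -> forall n, up s n = up s' n.
Proof. intros H [|n]; simpl; auto. rewrite H. auto. Qed.
Lemma fsubst_ext A : forall s s', (forall n, s n = s' n) -> fsubst s A = fsubst s' A.
Proof.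
  induction A; intros sb sb' H; simpl; f_equal; auto using tsubst_ext.
  apply IHA. apply up_ext. auto.
Qed.
Lemma up_subst_var d k U n : up (subst_var d k U) n = subst_var (S d) k (tshift U) n.
Proof.
  destruct n as [|m]; unfold subst_var; simpl; auto.
  repeat match goal with |- context [?a <? ?b] => destruct (Nat.ltb_spec a b)
    | |- context [?a =? ?b] => destruct (Nat.eqb_spec a b) end; unfold tshift; simpl; try lia; auto.
  destruct m; [lia|]. reflexivity.
Qed.
Lemma fsubst_all_subst_var d k U A :
  fsubst (subst_var d k U) (all A) = all (fsubst (subst_var (S d) k (tshift U)) A).
Proof. simpl. f_equal. apply fsubst_ext. apply up_subst_var. Qed.
Lemma tshift_subst_var U t : tshift t = tsubst (subst_var 0 0 U) t.
Proof. apply tsubst_ext. intro n. reflexivity. Qed.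
Lemma fshift_subst_var U A : fshift A = fsubst (subst_var 0 0 U) A.
Proof. apply fsubst_ext. intro n. reflexivity. Qed.
Lemma inst_subst_var A T : inst A T = fsubst (subst_var 0 1 T) A.
Proof. apply fsubst_ext. intros [|n]; reflexivity. Qed.
Definition subst_var_code d k u n := if n <? d then pair 0 n else if k =? 0 then pair 0 (S n)
   else if n =? d then u else pair 0 (Nat.pred n).

Lemma tcode_subst_var d k U u n : (k = 0 \/ tcode U = u) ->
  tcode (subst_var d k U n) = subst_var_code d k u n.
Proof.
  intro H. unfold subst_var, subst_var_code. destruct (n <? d); auto. destruct (Nat.eqb_spec k 0); auto.
  destruct (n =? d); auto. destruct H; [lia|auto].
Qed.

(* A judgment is a tag with five arguments, unused ones being 0; [holds] is its meaning. *)
Definition judg t v1 v2 v3 v4 v5 := pair t (pair v1 (pair v2 (pair v3 (pair v4 v5)))).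
Definition jtag f := pi1 f.
Definition jarg1 f := pi1 (pi2 f).
Definition jarg2 f := pi1 (pi2 (pi2 f)).
Definition jarg3 f := pi1 (pi2 (pi2 (pi2 f))).
Definition jarg4 f := pi1 (pi2 (pi2 (pi2 (pi2 f)))).
Definition jarg5 f := pi2 (pi2 (pi2 (pi2 (pi2 f)))).

Definition holds_eval c x y := forall C, encode C = c -> eval C x y.
Definition holds_mu f x n := forall C, encode C = f -> forall m, m < n ->
  exists v, v <> 0 /\ eval C (pair x m) v.
Definition holds_tsubst k d u a a' := exists t, tcode t = a /\
   forall U, (k = 0 \/ tcode U = u) -> a' = tcode (tsubst (subst_var d k U) t).
Definition holds_fsubst k d u a a' := exists X, fcode X = a /\
   forall U, (k = 0 \/ tcode U = u) -> a' = fcode (fsubst (subst_var d k U) X).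
Definition code_ctx G := code_list (map fcode G).
Definition holds_ctx_shift g g' := exists G, code_ctx G = g /\ g' = code_ctx (map fshift G).
Definition holds_mem a g := exists G X, code_ctx G = g /\ fcode X = a /\ In X G.
Definition holds_tclosed k a := exists t, tcode t = a /\ tclosed k t = true.
Definition holds_fclosed k a := exists X, fcode X = a /\ fclosed k X = true.
Definition holds_ctx_in_W e g := exists G, code_ctx G = g /\ forall B, In B G -> sentence B /\
   exists y, forall C, encode C = e -> eval C (fcode B) y.
Definition holds_nd g X := exists G Y, code_ctx G = g /\ fcode Y = X /\ nd G Y.
Definition holds_inst_pair s t A1 A2 := exists Y, forall S T, tcode S = s -> tcode T = t ->
   A1 = fcode (inst Y S) /\ A2 = fcode (inst Y T).

Definition holds f : Prop := match jtag f with
 | 0 => holds_eval (jarg1 f) (jarg2 f) (jarg3 f)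
 | 1 => holds_mu (jarg1 f) (jarg2 f) (jarg3 f)
 | 2 => holds_tsubst (jarg1 f) (jarg2 f) (jarg3 f) (jarg4 f) (jarg5 f)
 | 3 => holds_fsubst (jarg1 f) (jarg2 f) (jarg3 f) (jarg4 f) (jarg5 f)
 | 4 => holds_ctx_shift (jarg1 f) (jarg2 f)
 | 5 => holds_mem (jarg1 f) (jarg2 f)
 | 6 => holds_tclosed (jarg1 f) (jarg2 f)
 | 7 => holds_fclosed (jarg1 f) (jarg2 f)
 | 8 => holds_ctx_in_W (jarg1 f) (jarg2 f)
 | 9 => holds_nd (jarg1 f) (jarg2 f)
 | 10 => holds_inst_pair (jarg1 f) (jarg2 f) (jarg3 f) (jarg4 f)
 | _ => True end.

Definition ax_EV0 f := (jtag f =? 0) && (jarg1 f =? pair 0 0) && (jarg3 f =? 0).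
Definition ax_EV1 f := (jtag f =? 0) && (jarg1 f =? pair 1 0) && (jarg3 f =? S (jarg2 f)).
Definition ax_EV2 f := (jtag f =? 0) && (jarg1 f =? pair 2 0) && (jarg3 f =? jarg2 f).
Definition ax_EV3 f := (jtag f =? 0) && (jarg1 f =? pair 3 0) && (jarg3 f =? pi1 (jarg2 f)).
Definition ax_EV4 f := (jtag f =? 0) && (jarg1 f =? pair 4 0) && (jarg3 f =? pi2 (jarg2 f)).
Definition ax_MU0 f := (jtag f =? 1) && (jarg3 f =? 0).
Definition ax_TSvar f := (jtag f =? 2) && (pi1 (jarg4 f) =? 0) &&
  (jarg5 f =? subst_var_code (jarg2 f) (jarg1 f) (jarg3 f) (pi2 (jarg4 f))).
Definition ax_TSzero f := (jtag f =? 2) && (jarg4 f =? pair 1 0) && (jarg5 f =? pair 1 0).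
Definition ax_FSfal f := (jtag f =? 3) && (jarg4 f =? pair 0 0) && (jarg5 f =? pair 0 0).
Definition ax_SCnil f := (jtag f =? 4) && (jarg1 f =? 0) && (jarg2 f =? 0).
Definition ax_TCLvar f := (jtag f =? 6) && (pi1 (jarg2 f) =? 0) && (pi2 (jarg2 f) <? jarg1 f).
Definition ax_TCLzero f := (jtag f =? 6) && (jarg2 f =? pair 1 0).
Definition ax_FCLfal f := (jtag f =? 7) && (jarg2 f =? pair 0 0).
Definition ax_SUnil f := (jtag f =? 8) && (jarg2 f =? 0).

Definition axioms : list (nat -> bool) := [ax_EV0; ax_EV1; ax_EV2; ax_EV3; ax_EV4; ax_MU0; ax_TSvar; ax_TSzero;
  ax_FSfal; ax_SCnil; ax_TCLvar; ax_TCLzero; ax_FCLfal; ax_SUnil].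

Definition rl_EVcomp f a b (c d : nat) := (jtag f =? 0) && (pi1 (jarg1 f) =? 5) &&
  (a =? judg 0 (pi2 (pi2 (jarg1 f))) (jarg2 f) (jarg3 a) 0 0) && (b =? judg 0 (pi1 (pi2 (jarg1 f))) (jarg3 a) (jarg3 f) 0 0).
Definition rl_EVpair f a b (c d : nat) := (jtag f =? 0) && (pi1 (jarg1 f) =? 6) &&
  (a =? judg 0 (pi1 (pi2 (jarg1 f))) (jarg2 f) (pi1 (jarg3 f)) 0 0) && (b =? judg 0 (pi2 (pi2 (jarg1 f))) (jarg2 f) (pi2 (jarg3 f)) 0 0).
Definition rl_EVrec0 f a (b c d : nat) := (jtag f =? 0) && (pi1 (jarg1 f) =? 7) && (pi2 (jarg2 f) =? 0) &&
  (a =? judg 0 (pi1 (pi2 (jarg1 f))) (pi1 (jarg2 f)) (jarg3 f) 0 0).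
Definition rl_EVrecS f a b (c d : nat) := (jtag f =? 0) && (pi1 (jarg1 f) =? 7) && negb (pi2 (jarg2 f) =? 0) &&
  (a =? judg 0 (jarg1 f) (pair (pi1 (jarg2 f)) (Nat.pred (pi2 (jarg2 f)))) (jarg3 a) 0 0) &&
  (b =? judg 0 (pi2 (pi2 (jarg1 f))) (pair (pi1 (jarg2 f)) (pair (Nat.pred (pi2 (jarg2 f))) (jarg3 a))) (jarg3 f) 0 0).
Definition rl_EVmu f a b (c d : nat) := (jtag f =? 0) && (pi1 (jarg1 f) =? 8) &&
  (a =? judg 0 (pi2 (jarg1 f)) (pair (jarg2 f) (jarg3 f)) 0 0 0) && (b =? judg 1 (pi2 (jarg1 f)) (jarg2 f) (jarg3 f) 0 0).
Definition rl_MUS f a b (c d : nat) := (jtag f =? 1) && negb (jarg3 f =? 0) &&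
  (a =? judg 1 (jarg1 f) (jarg2 f) (Nat.pred (jarg3 f)) 0 0) &&
  (b =? judg 0 (jarg1 f) (pair (jarg2 f) (Nat.pred (jarg3 f))) (jarg3 b) 0 0) && negb (jarg3 b =? 0).
Definition rl_TSsucc f a (b c d : nat) := (jtag f =? 2) && (pi1 (jarg4 f) =? 2) && (pi1 (jarg5 f) =? 2) &&
  (a =? judg 2 (jarg1 f) (jarg2 f) (jarg3 f) (pi2 (jarg4 f)) (pi2 (jarg5 f))).
Definition rl_TSbin (n : nat) f a b (c d : nat) := (jtag f =? 2) && (pi1 (jarg4 f) =? n) && (pi1 (jarg5 f) =? n) &&
  (a =? judg 2 (jarg1 f) (jarg2 f) (jarg3 f) (pi1 (pi2 (jarg4 f))) (pi1 (pi2 (jarg5 f)))) &&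
  (b =? judg 2 (jarg1 f) (jarg2 f) (jarg3 f) (pi2 (pi2 (jarg4 f))) (pi2 (pi2 (jarg5 f)))).
Definition rl_FSeq f a b (c d : nat) := (jtag f =? 3) && (pi1 (jarg4 f) =? 1) && (pi1 (jarg5 f) =? 1) &&
  (a =? judg 2 (jarg1 f) (jarg2 f) (jarg3 f) (pi1 (pi2 (jarg4 f))) (pi1 (pi2 (jarg5 f)))) &&
  (b =? judg 2 (jarg1 f) (jarg2 f) (jarg3 f) (pi2 (pi2 (jarg4 f))) (pi2 (pi2 (jarg5 f)))).
Definition rl_FSimp f a b (c d : nat) := (jtag f =? 3) && (pi1 (jarg4 f) =? 2) && (pi1 (jarg5 f) =? 2) &&
  (a =? judg 3 (jarg1 f) (jarg2 f) (jarg3 f) (pi1 (pi2 (jarg4 f))) (pi1 (pi2 (jarg5 f)))) &&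
  (b =? judg 3 (jarg1 f) (jarg2 f) (jarg3 f) (pi2 (pi2 (jarg4 f))) (pi2 (pi2 (jarg5 f)))).
Definition rl_FSall f a b (c d : nat) := (jtag f =? 3) && (pi1 (jarg4 f) =? 3) && (pi1 (jarg5 f) =? 3) &&
  (a =? judg 3 (jarg1 f) (S (jarg2 f)) (jarg5 b) (pi2 (jarg4 f)) (pi2 (jarg5 f))) &&
  (b =? judg 2 0 0 0 (jarg3 f) (jarg5 b)).
Definition rl_SCcons f a b (c d : nat) := (jtag f =? 4) && negb (jarg1 f =? 0) && negb (jarg2 f =? 0) &&
  (a =? judg 3 0 0 (pair 1 0) (pi1 (Nat.pred (jarg1 f))) (pi1 (Nat.pred (jarg2 f)))) &&
  (b =? judg 4 (pi2 (Nat.pred (jarg1 f))) (pi2 (Nat.pred (jarg2 f))) 0 0 0).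
Definition rl_MEMhd f a (b c d : nat) := (jtag f =? 5) && negb (jarg2 f =? 0) &&
  (pi1 (Nat.pred (jarg2 f)) =? jarg1 f) && (a =? judg 4 (jarg2 f) (jarg2 a) 0 0 0).
Definition rl_MEMtl f a b (c d : nat) := (jtag f =? 5) && negb (jarg2 f =? 0) &&
  (a =? judg 5 (jarg1 f) (pi2 (Nat.pred (jarg2 f))) 0 0 0) && (b =? judg 4 (jarg2 f) (jarg2 b) 0 0 0).
Definition rl_TCLsucc f a (b c d : nat) := (jtag f =? 6) && (pi1 (jarg2 f) =? 2) &&
  (a =? judg 6 (jarg1 f) (pi2 (jarg2 f)) 0 0 0).
Definition rl_TCLbin (n : nat) f a b (c d : nat) := (jtag f =? 6) && (pi1 (jarg2 f) =? n) &&
  (a =? judg 6 (jarg1 f) (pi1 (pi2 (jarg2 f))) 0 0 0) && (b =? judg 6 (jarg1 f) (pi2 (pi2 (jarg2 f))) 0 0 0).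
Definition rl_FCLeq f a b (c d : nat) := (jtag f =? 7) && (pi1 (jarg2 f) =? 1) &&
  (a =? judg 6 (jarg1 f) (pi1 (pi2 (jarg2 f))) 0 0 0) && (b =? judg 6 (jarg1 f) (pi2 (pi2 (jarg2 f))) 0 0 0).
Definition rl_FCLimp f a b (c d : nat) := (jtag f =? 7) && (pi1 (jarg2 f) =? 2) &&
  (a =? judg 7 (jarg1 f) (pi1 (pi2 (jarg2 f))) 0 0 0) && (b =? judg 7 (jarg1 f) (pi2 (pi2 (jarg2 f))) 0 0 0).
Definition rl_FCLall f a (b c d : nat) := (jtag f =? 7) && (pi1 (jarg2 f) =? 3) &&
  (a =? judg 7 (S (jarg1 f)) (pi2 (jarg2 f)) 0 0 0).
Definition rl_SUcons f a b c (d : nat) := (jtag f =? 8) && negb (jarg2 f =? 0) &&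
  (a =? judg 8 (jarg1 f) (pi2 (Nat.pred (jarg2 f))) 0 0 0) && (b =? judg 7 0 (pi1 (Nat.pred (jarg2 f))) 0 0 0) &&
  (c =? judg 0 (jarg1 f) (pi1 (Nat.pred (jarg2 f))) (jarg3 c) 0 0).
Definition rl_NDax f a (b c d : nat) := (jtag f =? 9) && (a =? judg 5 (jarg2 f) (jarg1 f) 0 0 0).
Definition rl_NDimpI f a (b c d : nat) := (jtag f =? 9) && (pi1 (jarg2 f) =? 2) &&
  (a =? judg 9 (S (pair (pi1 (pi2 (jarg2 f))) (jarg1 f))) (pi2 (pi2 (jarg2 f))) 0 0 0).
Definition rl_NDimpE f a b (c d : nat) := (jtag f =? 9) && (b =? judg 9 (jarg1 f) (jarg2 b) 0 0 0) &&
  (a =? judg 9 (jarg1 f) (pair 2 (pair (jarg2 b) (jarg2 f))) 0 0 0).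
Definition rl_NDallI f a b (c d : nat) := (jtag f =? 9) && (pi1 (jarg2 f) =? 3) &&
  (a =? judg 4 (jarg1 f) (jarg2 a) 0 0 0) && (b =? judg 9 (jarg2 a) (pi2 (jarg2 f)) 0 0 0).
Definition rl_NDallE f a b c (d : nat) := (jtag f =? 9) && (b =? judg 3 1 0 (jarg3 b) (jarg4 b) (jarg2 f)) &&
  (a =? judg 9 (jarg1 f) (pair 3 (jarg4 b)) 0 0 0) && (c =? judg 2 0 0 0 (jarg3 b) (jarg5 c)).
Definition rl_NDraa f a (b c d : nat) := (jtag f =? 9) &&
  (a =? judg 9 (S (pair (pair 2 (pair (jarg2 f) (pair 0 0))) (jarg1 f))) (pair 0 0) 0 0 0).
Definition rl_NDrefl f a b (c d : nat) := (jtag f =? 9) && (pi1 (jarg2 f) =? 1) &&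
  (pi1 (pi2 (jarg2 f)) =? pi2 (pi2 (jarg2 f))) && (a =? judg 2 0 0 0 (pi1 (pi2 (jarg2 f))) (jarg5 a)) &&
  (b =? judg 4 (jarg1 f) (jarg2 b) 0 0 0).
Definition rl_NDeqE f a b c (d : nat) := (jtag f =? 9) && (pi1 (jarg2 a) =? 1) &&
  (a =? judg 9 (jarg1 f) (jarg2 a) 0 0 0) && (b =? judg 9 (jarg1 f) (jarg2 b) 0 0 0) &&
  (c =? judg 10 (pi1 (pi2 (jarg2 a))) (pi2 (pi2 (jarg2 a))) (jarg2 b) (jarg2 f) 0).
Definition rl_SB f a b (c d : nat) := (jtag f =? 10) &&
  (a =? judg 3 1 0 (jarg1 f) (jarg4 a) (jarg3 f)) && (b =? judg 3 1 0 (jarg2 f) (jarg4 a) (jarg4 f)).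

Definition rules : list (nat -> nat -> nat -> nat -> nat -> bool) :=
  [rl_EVcomp; rl_EVpair; rl_EVrec0; rl_EVrecS; rl_EVmu; rl_MUS; rl_TSsucc; rl_TSbin 3; rl_TSbin 4;
   rl_FSeq; rl_FSimp; rl_FSall; rl_SCcons; rl_MEMhd; rl_MEMtl; rl_TCLsucc; rl_TCLbin 3; rl_TCLbin 4;
   rl_FCLeq; rl_FCLimp; rl_FCLall; rl_SUcons; rl_NDax; rl_NDimpI; rl_NDimpE; rl_NDallI; rl_NDallE;
   rl_NDraa; rl_NDrefl; rl_NDeqE; rl_SB].

Definition is_axiom f := existsb (fun r => r f) axioms.
Definition is_rule_instance z := existsb (fun r =>
  r (pi1 z) (pi1 (pi2 z)) (pi1 (pi2 (pi2 z))) (pi1 (pi2 (pi2 (pi2 z)))) (pi2 (pi2 (pi2 (pi2 z))))) rules.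

Notation Deriv := (Derivable is_axiom is_rule_instance).

Lemma computableb_is_axiom : computableb is_axiom.
Proof.
  unfold computableb.
  cbv [is_axiom existsb axioms ax_EV0 ax_EV1 ax_EV2 ax_EV3 ax_EV4 ax_MU0 ax_TSvar ax_TSzero
   ax_FSfal ax_SCnil ax_TCLvar ax_TCLzero ax_FCLfal ax_SUnil jtag jarg1 jarg2 jarg3 jarg4 jarg5 judg subst_var_code].
  computable_auto.
Qed.
Lemma computableb_is_rule_instance : computableb is_rule_instance.
Proof.
  unfold computableb.
  cbv [is_rule_instance existsb rules rl_EVcomp rl_EVpair rl_EVrec0 rl_EVrecS rl_EVmu rl_MUS rl_TSsucc rl_TSbin
   rl_FSeq rl_FSimp rl_FSall rl_SCcons rl_MEMhd rl_MEMtl rl_TCLsucc rl_TCLbin rl_FCLeq rl_FCLimp rl_FCLall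
   rl_SUcons rl_NDax rl_NDimpI rl_NDimpE rl_NDallI rl_NDallE rl_NDraa rl_NDrefl rl_NDeqE rl_SB jtag jarg1 jarg2 jarg3 jarg4 jarg5 judg].
  computable_auto.
Qed.

Lemma jtag_judg t a b c d e : jtag (judg t a b c d e) = t. Proof. unfold jtag, judg. simpl_pi. auto. Qed.
Lemma jarg1_judg t a b c d e : jarg1 (judg t a b c d e) = a. Proof. unfold jarg1, judg. simpl_pi. auto. Qed.
Lemma jarg2_judg t a b c d e : jarg2 (judg t a b c d e) = b. Proof. unfold jarg2, judg. simpl_pi. auto. Qed.
Lemma jarg3_judg t a b c d e : jarg3 (judg t a b c d e) = c. Proof. unfold jarg3, judg. simpl_pi. auto. Qed.
Lemma jarg4_judg t a b c d e : jarg4 (judg t a b c d e) = d. Proof. unfold jarg4, judg. simpl_pi. auto. Qed.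
Lemma jarg5_judg t a b c d e : jarg5 (judg t a b c d e) = e. Proof. unfold jarg5, judg. simpl_pi. auto. Qed.
#[export] Hint Rewrite jtag_judg jarg1_judg jarg2_judg jarg3_judg jarg4_judg jarg5_judg pi1_pair pi2_pair : judgdb.
Lemma pair_pi_eta v : v = pair (pi1 v) (pi2 v). Proof. symmetry; apply pair_pi. Qed.
(** * Soundness of the calculus *)

Ltac destruct_bool := repeat match goal with
 | H : (_ && _) = true |- _ => apply andb_true_iff in H; destruct H
 | H : (_ =? _) = true |- _ => apply Nat.eqb_eq in H
 | H : negb _ = true |- _ => apply negb_true_iff in H
 | H : (_ =? _) = false |- _ => apply Nat.eqb_neq in H
 | H : (_ <? _) = true |- _ => apply Nat.ltb_lt in H
 end.

Ltac unfold_holds_in H E := rewrite E in H; unfold holds in H; autorewrite with judgdb in H; cbv beta iota in H.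
Ltac unfold_holds E := unfold holds; rewrite E; cbv beta iota.

Lemma code_ctx_inj G : forall G', code_ctx G = code_ctx G' -> G = G'.
Proof.
  unfold code_ctx. induction G; destruct G'; simpl; intro H; auto; try discriminate.
  injection H; intro H'. apply pair_inj in H'. destruct H'. f_equal; auto using fcode_inj.
Qed.
Lemma code_ctx_cons_inv G g : code_ctx G = g -> g <> 0 ->
  exists X G0, G = X :: G0 /\ fcode X = pi1 (Nat.pred g) /\ code_ctx G0 = pi2 (Nat.pred g).
Proof.
  unfold code_ctx. destruct G; simpl; intros H Hg; [lia|]. subst. simpl. simpl_pi. eauto.
Qed.

Ltac simpl_pi_all := repeat (rewrite pi1_pair in * || rewrite pi2_pair in *).
Ltac unfold_holds_goal := match goal with E : jtag ?f = _ |- holds ?f => unfold_holds E end.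
Ltac unfold_premise a := match goal with E : a = judg _ _ _ _ _ _, H : holds a |- _ => unfold_holds_in H E end.
Ltac destruct_code C HC := rewrite <- HC in *; destruct C; cbn [encode] in *; simpl_pi_all; try discriminate;
   try match goal with H : pair _ _ = pair _ _ |- _ => apply pair_inj in H; destruct H; discriminate end.

Ltac rewrite_args := repeat match goal with E : ?l = ?r |- context [?l] =>
  match l with jarg2 _ => rewrite E | jarg3 _ => rewrite E | jarg4 _ => rewrite E | jarg5 _ => rewrite E end end.

Ltac start_axiom r := unfold r; intro; destruct_bool; unfold_holds_goal.

Lemma ax_EV0_sound f : ax_EV0 f = true -> holds f.
Proof. start_axiom ax_EV0. intros C HC. destruct_code C HC. rewrite_args. constructor. Qed.
Lemma ax_EV1_sound f : ax_EV1 f = true -> holds f.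
Proof. start_axiom ax_EV1. intros C HC. destruct_code C HC. rewrite_args. constructor. Qed.
Lemma ax_EV2_sound f : ax_EV2 f = true -> holds f.
Proof. start_axiom ax_EV2. intros C HC. destruct_code C HC. rewrite_args. constructor. Qed.
Lemma ax_EV3_sound f : ax_EV3 f = true -> holds f.
Proof. start_axiom ax_EV3. intros C HC. destruct_code C HC. rewrite_args. rewrite (pair_pi_eta (jarg2 f)) at 1. constructor. Qed.
Lemma ax_EV4_sound f : ax_EV4 f = true -> holds f.
Proof. start_axiom ax_EV4. intros C HC. destruct_code C HC. rewrite_args. rewrite (pair_pi_eta (jarg2 f)) at 1. constructor. Qed.

Lemma pair_pi_tag1 v k : pi1 v = k -> v = pair k (pi2 v).
Proof. intro H. rewrite <- H. apply pair_pi_eta. Qed.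
Lemma pair_pi_tag2 v k : pi1 v = k -> v = pair k (pair (pi1 (pi2 v)) (pi2 (pi2 v))).
Proof. intro H. rewrite <- H, <- pair_pi_eta. apply pair_pi_eta. Qed.
Lemma code_ctx_cons X G : code_ctx (X :: G) = S (pair (fcode X) (code_ctx G)).
Proof. reflexivity. Qed.
Lemma succ_pair_pi_pred g : g <> 0 -> S (pair (pi1 (Nat.pred g)) (pi2 (Nat.pred g))) = g.
Proof. intro. rewrite pair_pi. lia. Qed.

Lemma ax_MU0_sound f : ax_MU0 f = true -> holds f.
Proof. start_axiom ax_MU0. intros C HC m Hm. lia. Qed.
Lemma ax_TSvar_sound f : ax_TSvar f = true -> holds f.
Proof.
  start_axiom ax_TSvar. exists (var (pi2 (jarg4 f))). split.
  - cbn [tcode]. rewrite (pair_pi_eta (jarg4 f)) at 2. congruence.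
  - intros U HU. rewrite_args. cbn [tsubst]. symmetry. apply tcode_subst_var. auto.
Qed.
Lemma ax_TSzero_sound f : ax_TSzero f = true -> holds f.
Proof. start_axiom ax_TSzero. exists zero. split; auto; try (intros; rewrite_args; reflexivity). Qed.
Lemma ax_FSfal_sound f : ax_FSfal f = true -> holds f.
Proof. start_axiom ax_FSfal. exists fal. split; auto; try (intros; rewrite_args; reflexivity). Qed.
Lemma ax_SCnil_sound f : ax_SCnil f = true -> holds f.
Proof. start_axiom ax_SCnil. exists []. split; auto. Qed.
Lemma ax_TCLvar_sound f : ax_TCLvar f = true -> holds f.
Proof.
  start_axiom ax_TCLvar. exists (var (pi2 (jarg2 f))). split.
  - cbn [tcode]. rewrite (pair_pi_eta (jarg2 f)) at 2. congruence.
  - cbn [tclosed]. apply Nat.ltb_lt. auto.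
Qed.
Lemma ax_TCLzero_sound f : ax_TCLzero f = true -> holds f.
Proof. start_axiom ax_TCLzero. exists zero. split; auto. Qed.
Lemma ax_FCLfal_sound f : ax_FCLfal f = true -> holds f.
Proof. start_axiom ax_FCLfal. exists fal. split; auto. Qed.
Lemma ax_SUnil_sound f : ax_SUnil f = true -> holds f.
Proof. start_axiom ax_SUnil. exists []. split; auto. intros B []. Qed.

Lemma axiom_sound f : is_axiom f = true -> holds f.
Proof.
  unfold is_axiom. intro H. apply existsb_exists in H. destruct H as [r [Hin Hr]].
  cbn [axioms In] in Hin.
  repeat destruct Hin as [<-|Hin]; try contradiction;
  eauto using ax_EV0_sound, ax_EV1_sound, ax_EV2_sound, ax_EV3_sound, ax_EV4_sound, ax_MU0_sound, ax_TSvar_sound,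
    ax_TSzero_sound, ax_FSfal_sound, ax_SCnil_sound,
    ax_TCLvar_sound, ax_TCLzero_sound, ax_FCLfal_sound, ax_SUnil_sound.
Qed.

Definition rule_sound (r : nat -> nat -> nat -> nat -> nat -> bool) : Prop :=
  forall f a b c d, r f a b c d = true -> holds a -> holds b -> holds c -> holds d -> holds f.

Ltac start_rule R a b c := unfold rule_sound, R; intros f a b c d Hr Ha Hb Hc Hd; destruct_bool;
  try unfold_premise a; try unfold_premise b; try unfold_premise c; unfold_holds_goal.

Lemma rl_EVcomp_sound : rule_sound rl_EVcomp.
Proof.
  start_rule rl_EVcomp a b c. intros C HC. destruct_code C HC.
  eapply ev_comp; [apply Ha; reflexivity|apply Hb; reflexivity].
Qed.
Lemma rl_EVpair_sound : rule_sound rl_EVpair.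
Proof.
  start_rule rl_EVpair a b c. intros C HC. destruct_code C HC. rewrite (pair_pi_eta (jarg3 f)).
  constructor; [apply Ha; reflexivity|apply Hb; reflexivity].
Qed.
Lemma rl_EVrec0_sound : rule_sound rl_EVrec0.
Proof.
  start_rule rl_EVrec0 a b c. intros C HC. destruct_code C HC. rewrite (pair_pi_eta (jarg2 f)) at 1.
  match goal with E : pi2 (jarg2 f) = 0 |- _ => rewrite E end.
  constructor. apply Ha; reflexivity.
Qed.
Lemma rl_EVrecS_sound : rule_sound rl_EVrecS.
Proof.
  start_rule rl_EVrecS a b c. intros C HC. destruct_code C HC.
  replace (jarg2 f) with (pair (pi1 (jarg2 f)) (S (Nat.pred (pi2 (jarg2 f))))) at 1
    by (rewrite Nat.succ_pred by auto; apply pair_pi).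
  eapply ev_recS; [apply Ha; reflexivity|apply Hb; reflexivity].
Qed.
Lemma rl_EVmu_sound : rule_sound rl_EVmu.
Proof.
  start_rule rl_EVmu a b c. intros C HC. destruct_code C HC.
  constructor; [apply Ha; reflexivity|apply Hb; reflexivity].
Qed.
Lemma rl_MUS_sound : rule_sound rl_MUS.
Proof.
  start_rule rl_MUS a b c. intros C HC m Hm.
  destruct (Nat.eq_dec m (Nat.pred (jarg3 f))).
  - subst m. exists (jarg3 b). split; auto.
  - apply Ha; auto. lia.
Qed.
Lemma rl_TSsucc_sound : rule_sound rl_TSsucc.
Proof.
  start_rule rl_TSsucc a b c. destruct Ha as [t [Ht HU]]. exists (succ t). split.
  - cbn [tcode]. rewrite Ht. symmetry. apply pair_pi_tag1. auto.
  - intros U HU'. cbn [tsubst tcode]. rewrite <- (HU U HU'). apply pair_pi_tag1. auto.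
Qed.
Lemma rl_TSbin_sound n : n = 3 \/ n = 4 -> rule_sound (rl_TSbin n).
Proof.
  intro Hn. start_rule rl_TSbin a b c. destruct Ha as [t1 [Ht1 HU1]], Hb as [t2 [Ht2 HU2]].
  destruct Hn; subst n.
  - exists (plus t1 t2). split.
    + cbn [tcode]. rewrite Ht1, Ht2. symmetry. apply pair_pi_tag2. auto.
    + intros U HU. cbn [tsubst tcode]. rewrite <- (HU1 U HU), <- (HU2 U HU). apply pair_pi_tag2. auto.
  - exists (mult t1 t2). split.
    + cbn [tcode]. rewrite Ht1, Ht2. symmetry. apply pair_pi_tag2. auto.
    + intros U HU. cbn [tsubst tcode]. rewrite <- (HU1 U HU), <- (HU2 U HU). apply pair_pi_tag2. auto.
Qed.
Lemma rl_FSeq_sound : rule_sound rl_FSeq.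
Proof.
  start_rule rl_FSeq a b c. destruct Ha as [t1 [Ht1 HU1]], Hb as [t2 [Ht2 HU2]].
  exists (eqf t1 t2). split.
  + cbn [fcode]. rewrite Ht1, Ht2. symmetry. apply pair_pi_tag2. auto.
  + intros U HU. cbn [fsubst fcode]. rewrite <- (HU1 U HU), <- (HU2 U HU). apply pair_pi_tag2. auto.
Qed.
Lemma rl_FSimp_sound : rule_sound rl_FSimp.
Proof.
  start_rule rl_FSimp a b c. destruct Ha as [t1 [Ht1 HU1]], Hb as [t2 [Ht2 HU2]].
  exists (imp t1 t2). split.
  + cbn [fcode]. rewrite Ht1, Ht2. symmetry. apply pair_pi_tag2. auto.
  + intros U HU. cbn [fsubst fcode]. rewrite <- (HU1 U HU), <- (HU2 U HU). apply pair_pi_tag2. auto.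
Qed.
Lemma rl_FSall_sound : rule_sound rl_FSall.
Proof.
  start_rule rl_FSall a b c. destruct Ha as [X [HX HXU]], Hb as [t [Ht HtU]].
  exists (all X). split.
  + cbn [fcode]. rewrite HX. symmetry. apply pair_pi_tag1. auto.
  + intros U HU. rewrite fsubst_all_subst_var. cbn [fcode]. rewrite <- (HXU (tshift U)).
    * apply pair_pi_tag1. auto.
    * destruct HU as [HU|HU]; [left; auto|right].
      rewrite (HtU U (or_introl eq_refl)). rewrite <- Ht in HU. apply tcode_inj in HU. subst.
      rewrite <- tshift_subst_var. reflexivity.
Qed.
Lemma rl_SCcons_sound : rule_sound rl_SCcons.
Proof.
  start_rule rl_SCcons a b c. destruct Ha as [X [HX HXU]], Hb as [G0 [HG0 HG0']].
  exists (X :: G0). split.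
  + rewrite code_ctx_cons, HX, HG0. apply succ_pair_pi_pred. auto.
  + cbn [map].
    rewrite code_ctx_cons, <- HG0', (fshift_subst_var zero), <- (HXU zero (or_introl eq_refl)).
    symmetry. apply succ_pair_pi_pred. auto.
Qed.
Lemma rl_MEMhd_sound : rule_sound rl_MEMhd.
Proof.
  start_rule rl_MEMhd a b c. destruct Ha as [G [HG _]].
  destruct (code_ctx_cons_inv G _ HG) as [X [G0 [-> [HX HG0]]]]; auto.
  exists (X :: G0), X. split; auto. split; [congruence|simpl; auto].
Qed.
Lemma rl_MEMtl_sound : rule_sound rl_MEMtl.
Proof.
  start_rule rl_MEMtl a b c. destruct Hb as [G [HG _]].
  destruct (code_ctx_cons_inv G _ HG) as [X [G0 [-> [HX HG0]]]]; auto.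
  destruct Ha as [G1 [Y [HG1 [HY HIn]]]]. rewrite <- HG0 in HG1. apply code_ctx_inj in HG1. subst.
  exists (X :: G0), Y. split; auto. split; auto. simpl; auto.
Qed.
Lemma rl_TCLsucc_sound : rule_sound rl_TCLsucc.
Proof.
  start_rule rl_TCLsucc a b c. destruct Ha as [t [Ht Hc1]]. exists (succ t). split; auto.
  cbn [tcode]. rewrite Ht. symmetry. apply pair_pi_tag1. auto.
Qed.
Lemma rl_TCLbin_sound n : n = 3 \/ n = 4 -> rule_sound (rl_TCLbin n).
Proof.
  intro Hn. start_rule rl_TCLbin a b c. destruct Ha as [t1 [Ht1 Hc1]], Hb as [t2 [Ht2 Hc2]].
  destruct Hn; subst n; [exists (plus t1 t2)|exists (mult t1 t2)]; split; cbn [tclosed];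
    try (rewrite Hc1, Hc2; reflexivity); cbn [tcode]; rewrite Ht1, Ht2; symmetry; apply pair_pi_tag2; auto.
Qed.
Lemma rl_FCLeq_sound : rule_sound rl_FCLeq.
Proof.
  start_rule rl_FCLeq a b c. destruct Ha as [t1 [Ht1 Hc1]], Hb as [t2 [Ht2 Hc2]].
  exists (eqf t1 t2); split; cbn [fclosed];
    try (rewrite Hc1, Hc2; reflexivity); cbn [fcode]; rewrite Ht1, Ht2; symmetry; apply pair_pi_tag2; auto.
Qed.
Lemma rl_FCLimp_sound : rule_sound rl_FCLimp.
Proof.
  start_rule rl_FCLimp a b c. destruct Ha as [t1 [Ht1 Hc1]], Hb as [t2 [Ht2 Hc2]].
  exists (imp t1 t2); split; cbn [fclosed];
    try (rewrite Hc1, Hc2; reflexivity); cbn [fcode]; rewrite Ht1, Ht2; symmetry; apply pair_pi_tag2; auto.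
Qed.
Lemma rl_FCLall_sound : rule_sound rl_FCLall.
Proof.
  start_rule rl_FCLall a b c. destruct Ha as [t [Ht Hc1]]. exists (all t). split; auto.
  cbn [fcode]. rewrite Ht. symmetry. apply pair_pi_tag1. auto.
Qed.
Lemma rl_SUcons_sound : rule_sound rl_SUcons.
Proof.
  start_rule rl_SUcons a b c. destruct Ha as [G0 [HG0 HW]], Hb as [B [HB HBc]].
  exists (B :: G0). split.
  + rewrite code_ctx_cons, HB, HG0. apply succ_pair_pi_pred. auto.
  + intros B' [<-|HB']; auto. split; auto. exists (jarg3 c). intros C HC. rewrite HB. apply Hc. auto.
Qed.
Lemma rl_NDax_sound : rule_sound rl_NDax.
Proof.
  start_rule rl_NDax a b c. destruct Ha as [G [X [HG [HX HIn]]]]. exists G, X. repeat split; auto.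
  constructor; auto.
Qed.
Lemma rl_NDimpI_sound : rule_sound rl_NDimpI.
Proof.
  start_rule rl_NDimpI a b c. destruct Ha as [G' [Y [HG' [HY Hnd]]]].
  destruct (code_ctx_cons_inv G' _ HG') as [X [G0 [-> [HX HG0]]]]; [lia|].
  cbn [Nat.pred] in *. simpl_pi_all.
  exists G0, (imp X Y). split; [auto|split].
  - cbn [fcode]. rewrite HX, HY. symmetry. apply pair_pi_tag2. auto.
  - apply nd_impI. auto.
Qed.

Lemma rl_NDimpE_sound : rule_sound rl_NDimpE.
Proof.
  start_rule rl_NDimpE a b c.
  destruct Hb as [G2 [Y2 [HG2 [HY2 Hnd2]]]], Ha as [G1 [Y1 [HG1 [HY1 Hnd1]]]].
  rewrite <- HG2 in HG1. apply code_ctx_inj in HG1. subst G1.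
  destruct Y1; cbn [fcode] in HY1; apply pair_inj in HY1; destruct HY1 as [Ht HY1]; try discriminate.
  apply pair_inj in HY1. destruct HY1 as [HY1a HY1b]. rewrite <- HY2 in HY1a.
  apply fcode_inj in HY1a. subst.
  exists G2, Y1_2. split; [auto|split; [auto|]]. eapply nd_impE; eauto.
Qed.
Lemma rl_NDallI_sound : rule_sound rl_NDallI.
Proof.
  start_rule rl_NDallI a b c. destruct Ha as [G [HG HG']], Hb as [G'' [Y [HG'' [HY Hnd]]]].
  rewrite HG' in HG''. apply code_ctx_inj in HG''. subst.
  exists G, (all Y). split; [auto|split].
  - cbn [fcode]. rewrite HY. symmetry. apply pair_pi_tag1. auto.
  - apply nd_allI. auto.
Qed.
Lemma rl_NDallE_sound : rule_sound rl_NDallE.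
Proof.
  start_rule rl_NDallE a b c. destruct Hb as [X [HX HXU]], Ha as [G [Z [HG [HZ Hnd]]]], Hc as [t [Ht _]].
  destruct Z; cbn [fcode] in HZ; apply pair_inj in HZ; destruct HZ as [Ht' HZ]; try discriminate.
  rewrite <- HX in HZ. apply fcode_inj in HZ. subst.
  exists G, (inst X t). split; [auto|split].
  - rewrite inst_subst_var. symmetry. apply HXU. auto.
  - apply nd_allE. auto.
Qed.
Lemma rl_NDraa_sound : rule_sound rl_NDraa.
Proof.
  start_rule rl_NDraa a b c. destruct Ha as [G' [Y [HG' [HY Hnd]]]].
  destruct (code_ctx_cons_inv G' _ HG') as [Z [G0 [-> [HZ HG0]]]]; [lia|].
  cbn [Nat.pred] in *. simpl_pi_all.
  destruct Z; cbn [fcode] in HZ; apply pair_inj in HZ; destruct HZ as [Ht' HZ]; try discriminate.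
  apply pair_inj in HZ. destruct HZ as [HZ1 HZ2].
  destruct Z2; cbn [fcode] in HZ2; apply pair_inj in HZ2; destruct HZ2 as [Ht2 HZ2]; try discriminate.
  destruct Y; cbn [fcode] in HY; apply pair_inj in HY; destruct HY as [Ht3 HY]; try discriminate.
  exists G0, Z1. split; [auto|split; [auto|]]. apply nd_raa. exact Hnd.
Qed.
Lemma rl_NDrefl_sound : rule_sound rl_NDrefl.
Proof.
  start_rule rl_NDrefl a b c. destruct Ha as [t [Ht _]], Hb as [G [HG _]].
  exists G, (eqf t t). split; [auto|split].
  - cbn [fcode]. rewrite (pair_pi_tag2 (jarg2 f) 1) by auto. congruence.
  - apply nd_refl.
Qed.
Lemma rl_NDeqE_sound : rule_sound rl_NDeqE.
Proof.
  start_rule rl_NDeqE a b c.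
  destruct Ha as [G [Z [HG [HZ Hnd]]]], Hb as [G' [Y1 [HG' [HY1 Hnd1]]]], Hc as [Y HY].
  rewrite <- HG in HG'. apply code_ctx_inj in HG'. subst G'.
  destruct Z; cbn [fcode] in HZ; rewrite <- HZ in *; simpl_pi_all; try discriminate.
  destruct (HY s t eq_refl eq_refl) as [E1 E2].
  rewrite <- HY1 in E1. apply fcode_inj in E1. subst Y1.
  exists G, (inst Y t). split; [auto|split; [auto|]]. eapply nd_eqE; eauto.
Qed.
Lemma rl_SB_sound : rule_sound rl_SB.
Proof.
  start_rule rl_SB a b c. destruct Ha as [X [HX HXU]], Hb as [X' [HX' HXU']].
  rewrite <- HX in HX'. apply fcode_inj in HX'. subst X'.
  exists X. intros S T HS HT. rewrite !inst_subst_var. split; [apply HXU|apply HXU']; auto.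
Qed.

Lemma rules_sound : Forall rule_sound rules.
Proof.
  repeat constructor;
  auto using rl_EVcomp_sound, rl_EVpair_sound, rl_EVrec0_sound, rl_EVrecS_sound, rl_EVmu_sound,
    rl_MUS_sound, rl_TSsucc_sound, rl_TSbin_sound, rl_FSeq_sound, rl_FSimp_sound, rl_FSall_sound,
    rl_SCcons_sound, rl_MEMhd_sound, rl_MEMtl_sound, rl_TCLsucc_sound, rl_TCLbin_sound,
    rl_FCLeq_sound, rl_FCLimp_sound, rl_FCLall_sound, rl_SUcons_sound, rl_NDax_sound,
    rl_NDimpI_sound, rl_NDimpE_sound, rl_NDallI_sound, rl_NDallE_sound, rl_NDraa_sound,
    rl_NDrefl_sound, rl_NDeqE_sound, rl_SB_sound.
Qed.

Lemma Deriv_sound f : Deriv f -> holds f.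
Proof.
  induction 1.
  - apply axiom_sound; auto.
  - unfold is_rule_instance, rule_instance in *. simpl_pi_all.
    match goal with H : existsb _ rules = true |- _ => apply existsb_exists in H as [r [Hin Hr]] end.
    eapply Forall_forall in Hin; [|exact rules_sound]. eauto.
Qed.

(** * Completeness of the calculus *)

Ltac select_in := repeat match goal with
  | |- ?x = ?x \/ _ => left; reflexivity
  | |- ?x = ?x => reflexivity
  | |- _ \/ _ => right end.

Lemma Deriv_by_axiom r f : In r axioms -> r f = true -> Deriv f.
Proof. intros Hin Hr. apply Derivable_axiom. unfold is_axiom. apply existsb_exists. eauto. Qed.
Lemma Deriv_by_rule r f a b c d : Deriv a -> Deriv b -> Deriv c -> Deriv d ->
  In r rules -> r f a b c d = true -> Deriv f.
Proof.
  intros Ha Hb Hc Hd Hin Hr. apply (Derivable_rule _ _ f a b c d); auto.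
  unfold is_rule_instance, rule_instance. apply existsb_exists.
  exists r. split; auto. simpl_pi_all. auto.
Qed.

Ltac solve_bool := autorewrite with judgdb; cbn [Nat.pred]; simpl_pi_all;
  repeat (rewrite andb_true_iff; split);
  try (apply Nat.eqb_eq; reflexivity); try (apply negb_true_iff, Nat.eqb_neq; lia);
  try (apply Nat.ltb_lt; lia).
Ltac by_axiom r := apply (Deriv_by_axiom r); [cbn [axioms In]; select_in|unfold r; solve_bool].
Ltac unfold_rule r := match r with ?h _ => unfold h | _ => unfold r end.
Ltac by_rule r a b c d := apply (Deriv_by_rule r _ a b c d); [| | | |cbn [rules In]; select_in|unfold_rule r; solve_bool].

Lemma pair_0_0 : pair 0 0 = 0. Proof. reflexivity. Qed.

(* [0 = judg 0 0 0 0 0 0] records that [cZero] maps 0 to 0; it fills the premises a rule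
   ignores. *)
Lemma Deriv_0 : Deriv 0.
Proof. rewrite <- pair_0_0. by_axiom ax_EV0. Qed.
#[local] Hint Resolve Deriv_0 : core.

Lemma Deriv_tsubst t : forall d k U,
  Deriv (judg 2 k d (tcode U) (tcode t) (tcode (tsubst (subst_var d k U) t))).
Proof.
  induction t; intros d k U; cbn [tsubst tcode].
  - by_axiom ax_TSvar. rewrite (tcode_subst_var d k U (tcode U) n (or_intror eq_refl)).
    apply Nat.eqb_refl.
  - by_axiom ax_TSzero.
  - by_rule rl_TSsucc (judg 2 k d (tcode U) (tcode t) (tcode (tsubst (subst_var d k U) t))) 0 0 0; auto.
  - by_rule (rl_TSbin 3) (judg 2 k d (tcode U) (tcode t1) (tcode (tsubst (subst_var d k U) t1)))
      (judg 2 k d (tcode U) (tcode t2) (tcode (tsubst (subst_var d k U) t2))) 0 0; auto.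
  - by_rule (rl_TSbin 4) (judg 2 k d (tcode U) (tcode t1) (tcode (tsubst (subst_var d k U) t1)))
      (judg 2 k d (tcode U) (tcode t2) (tcode (tsubst (subst_var d k U) t2))) 0 0; auto.
Qed.

Lemma Deriv_tshift U : Deriv (judg 2 0 0 0 (tcode U) (tcode (tshift U))).
Proof. pose proof (Deriv_tsubst U 0 0 (var 0)). cbn [tcode] in H. rewrite pair_0_0 in H. rewrite (tshift_subst_var (var 0)). exact H. Qed.

Lemma Deriv_fsubst X : forall d k U,
  Deriv (judg 3 k d (tcode U) (fcode X) (fcode (fsubst (subst_var d k U) X))).
Proof.
  induction X; intros d k U.
  - cbn [fsubst fcode]. by_axiom ax_FSfal.
  - cbn [fsubst fcode].
    by_rule rl_FSeq (judg 2 k d (tcode U) (tcode s) (tcode (tsubst (subst_var d k U) s)))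
      (judg 2 k d (tcode U) (tcode t) (tcode (tsubst (subst_var d k U) t))) 0 0; auto using Deriv_tsubst.
  - cbn [fsubst fcode].
    by_rule rl_FSimp (judg 3 k d (tcode U) (fcode X1) (fcode (fsubst (subst_var d k U) X1)))
      (judg 3 k d (tcode U) (fcode X2) (fcode (fsubst (subst_var d k U) X2))) 0 0; auto.
  - rewrite fsubst_all_subst_var. cbn [fcode].
    by_rule rl_FSall (judg 3 k (S d) (tcode (tshift U)) (fcode X) (fcode (fsubst (subst_var (S d) k (tshift U)) X)))
      (judg 2 0 0 0 (tcode U) (tcode (tshift U))) 0 0; auto using Deriv_tshift.
Qed.

Lemma Deriv_fshift X : Deriv (judg 3 0 0 (pair 1 0) (fcode X) (fcode (fshift X))).
Proof. rewrite (fshift_subst_var zero). exact (Deriv_fsubst X 0 0 zero). Qed.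
Lemma Deriv_inst X t : Deriv (judg 3 1 0 (tcode t) (fcode X) (fcode (inst X t))).
Proof. rewrite inst_subst_var. exact (Deriv_fsubst X 0 1 t). Qed.

Lemma Deriv_ctx_shift G : Deriv (judg 4 (code_ctx G) (code_ctx (map fshift G)) 0 0 0).
Proof.
  induction G as [|X G IH].
  - cbn. by_axiom ax_SCnil.
  - cbn [map]. rewrite !code_ctx_cons.
    by_rule rl_SCcons (judg 3 0 0 (pair 1 0) (fcode X) (fcode (fshift X))) (judg 4 (code_ctx G) (code_ctx (map fshift G)) 0 0 0) 0 0;
    auto using Deriv_fshift.
Qed.

Lemma Deriv_mem X G : In X G -> Deriv (judg 5 (fcode X) (code_ctx G) 0 0 0).
Proof.
  induction G as [|Y G IH]; intro H; [destruct H|].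
  destruct H as [->|H].
  - rewrite code_ctx_cons.
    by_rule rl_MEMhd (judg 4 (code_ctx (X :: G)) (code_ctx (map fshift (X :: G))) 0 0 0) 0 0 0; auto using Deriv_ctx_shift.
  - rewrite code_ctx_cons.
    by_rule rl_MEMtl (judg 5 (fcode X) (code_ctx G) 0 0 0) (judg 4 (code_ctx (Y :: G)) (code_ctx (map fshift (Y :: G))) 0 0 0) 0 0;
    auto using Deriv_ctx_shift.
Qed.

Lemma Deriv_tclosed t : forall k, tclosed k t = true -> Deriv (judg 6 k (tcode t) 0 0 0).
Proof.
  induction t; intros k H; cbn [tcode tclosed] in *.
  - apply Nat.ltb_lt in H. by_axiom ax_TCLvar.
  - by_axiom ax_TCLzero.
  - by_rule rl_TCLsucc (judg 6 k (tcode t) 0 0 0) 0 0 0; auto.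
  - apply andb_true_iff in H. destruct H.
    by_rule (rl_TCLbin 3) (judg 6 k (tcode t1) 0 0 0) (judg 6 k (tcode t2) 0 0 0) 0 0; auto.
  - apply andb_true_iff in H. destruct H.
    by_rule (rl_TCLbin 4) (judg 6 k (tcode t1) 0 0 0) (judg 6 k (tcode t2) 0 0 0) 0 0; auto.
Qed.
Lemma Deriv_fclosed X : forall k, fclosed k X = true -> Deriv (judg 7 k (fcode X) 0 0 0).
Proof.
  induction X; intros k H; cbn [fcode fclosed] in *.
  - by_axiom ax_FCLfal.
  - apply andb_true_iff in H. destruct H.
    by_rule rl_FCLeq (judg 6 k (tcode s) 0 0 0) (judg 6 k (tcode t) 0 0 0) 0 0; auto using Deriv_tclosed.
  - apply andb_true_iff in H. destruct H.
    by_rule rl_FCLimp (judg 7 k (fcode X1) 0 0 0) (judg 7 k (fcode X2) 0 0 0) 0 0; auto.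
  - by_rule rl_FCLall (judg 7 (S k) (fcode X) 0 0 0) 0 0 0; auto.
Qed.

Lemma Deriv_mu f x n : (forall m, m < n -> exists v, v <> 0 /\ Deriv (judg 0 f (pair x m) v 0 0)) ->
  Deriv (judg 1 f x n 0 0).
Proof.
  induction n; intro H.
  - by_axiom ax_MU0.
  - destruct (H n) as [v [Hv Dv]]; [lia|].
    by_rule rl_MUS (judg 1 f x n 0 0) (judg 0 f (pair x n) v 0 0) 0 0; auto.
Qed.

Lemma Deriv_eval_rec C1 C2 (IH1 : forall x y, eval C1 x y -> Deriv (judg 0 (encode C1) x y 0 0))
  (IH2 : forall x y, eval C2 x y -> Deriv (judg 0 (encode C2) x y 0 0)) :
  forall n x y, eval (cRec C1 C2) (pair x n) y -> Deriv (judg 0 (encode (cRec C1 C2)) (pair x n) y 0 0).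
Proof.
  induction n; intros x y H; inversion H; subst; inv_pair; try lia; cbn [encode].
  - by_rule rl_EVrec0 (judg 0 (encode C1) x y 0 0) 0 0 0; auto.
  - match goal with E : S _ = S _ |- _ => injection E as -> end.
    match goal with E1 : eval (cRec _ _) _ ?r |- _ =>
      by_rule rl_EVrecS (judg 0 (pair 7 (pair (encode C1) (encode C2))) (pair x n) r 0 0)
         (judg 0 (encode C2) (pair x (pair n r)) y 0 0) 0 0 end; auto.
Qed.

Lemma Deriv_eval C : forall x y, eval C x y -> Deriv (judg 0 (encode C) x y 0 0).
Proof.
  induction C; intros x y H.
  8: { inversion H; subst; apply Deriv_eval_rec; auto. }
  all: cbn [encode].
  - inversion H; subst. by_axiom ax_EV0.
  - inversion H; subst. by_axiom ax_EV1.
  - inversion H; subst. by_axiom ax_EV2.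
  - inversion H; subst. by_axiom ax_EV3.
  - inversion H; subst. by_axiom ax_EV4.
  - inversion H; subst.
    by_rule rl_EVcomp (judg 0 (encode C2) x y0 0 0) (judg 0 (encode C1) y0 y 0 0) 0 0; auto.
  - inversion H; subst.
    by_rule rl_EVpair (judg 0 (encode C1) x a 0 0) (judg 0 (encode C2) x b 0 0) 0 0; auto.
  - inversion H; subst.
    by_rule rl_EVmu (judg 0 (encode C) (pair x y) 0 0 0) (judg 1 (encode C) x y 0 0) 0 0; auto.
    apply Deriv_mu. intros m Hm. match goal with Hf : forall m, m < y -> _ |- _ => destruct (Hf m Hm) as [v [Hv Ev]] end. eauto.
Qed.

Lemma Deriv_ctx_in_W e G : (forall B, In B G -> sentence B /\ exists C y, encode C = e /\ eval C (fcode B) y) ->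
  Deriv (judg 8 e (code_ctx G) 0 0 0).
Proof.
  induction G as [|B G IH]; intro H.
  - cbn. by_axiom ax_SUnil.
  - rewrite code_ctx_cons. destruct (H B (or_introl eq_refl)) as [HB [C [y [HC Ev]]]].
    by_rule rl_SUcons (judg 8 e (code_ctx G) 0 0 0) (judg 7 0 (fcode B) 0 0 0) (judg 0 e (fcode B) y 0 0) 0; auto.
    + apply IH. intros; apply H; simpl; auto.
    + apply Deriv_fclosed. exact HB.
    + subst. apply Deriv_eval. auto.
Qed.

Lemma Deriv_nd G X : nd G X -> Deriv (judg 9 (code_ctx G) (fcode X) 0 0 0).
Proof.
  induction 1.
  - by_rule rl_NDax (judg 5 (fcode A) (code_ctx G) 0 0 0) 0 0 0; auto using Deriv_mem.
  - cbn [fcode]. rewrite code_ctx_cons in IHnd.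
    by_rule rl_NDimpI (judg 9 (S (pair (fcode A) (code_ctx G))) (fcode B) 0 0 0) 0 0 0; auto.
  - by_rule rl_NDimpE (judg 9 (code_ctx G) (fcode (imp A B)) 0 0 0) (judg 9 (code_ctx G) (fcode A) 0 0 0) 0 0; auto.
  - cbn [fcode].
    by_rule rl_NDallI (judg 4 (code_ctx G) (code_ctx (map fshift G)) 0 0 0) (judg 9 (code_ctx (map fshift G)) (fcode A) 0 0 0) 0 0;
    auto using Deriv_ctx_shift.
  - by_rule rl_NDallE (judg 9 (code_ctx G) (fcode (all A)) 0 0 0) (judg 3 1 0 (tcode t) (fcode A) (fcode (inst A t)))
      (judg 2 0 0 0 (tcode t) (tcode (tshift t))) 0; auto using Deriv_inst, Deriv_tshift.
  - cbn [fcode code_ctx map code_list neg] in *.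
    by_rule rl_NDraa (judg 9 (S (pair (pair 2 (pair (fcode A) (pair 0 0))) (code_ctx G))) (pair 0 0) 0 0 0) 0 0 0; auto.
  - cbn [fcode].
    by_rule rl_NDrefl (judg 2 0 0 0 (tcode t) (tcode (tshift t))) (judg 4 (code_ctx G) (code_ctx (map fshift G)) 0 0 0) 0 0;
    auto using Deriv_tshift, Deriv_ctx_shift.
  - cbn [fcode] in IHnd1.
    by_rule rl_NDeqE (judg 9 (code_ctx G) (pair 1 (pair (tcode s) (tcode t))) 0 0 0) (judg 9 (code_ctx G) (fcode (inst A s)) 0 0 0)
      (judg 10 (tcode s) (tcode t) (fcode (inst A s)) (fcode (inst A t)) 0) 0; auto.
    by_rule rl_SB (judg 3 1 0 (tcode s) (fcode A) (fcode (inst A s))) (judg 3 1 0 (tcode t) (fcode A) (fcode (inst A t))) 0 0;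
    auto using Deriv_inst.
Qed.

Lemma Deriv_eval_iff C x y : Deriv (judg 0 (encode C) x y 0 0) <-> eval C x y.
Proof.
  split; [|apply Deriv_eval].
  intro H. apply Deriv_sound in H. unfold holds in H. autorewrite with judgdb in H. auto.
Qed.
Lemma Deriv_ctx_in_W_sound e g : Deriv (judg 8 e g 0 0 0) -> holds_ctx_in_W e g.
Proof. intro H. apply Deriv_sound in H. unfold holds in H. autorewrite with judgdb in H. exact H. Qed.
Lemma Deriv_nd_sound g X : Deriv (judg 9 g X 0 0 0) -> holds_nd g X.
Proof. intro H. apply Deriv_sound in H. unfold holds in H. autorewrite with judgdb in H. exact H. Qed.

(** * The diagonal theory *)

Fixpoint const_code n := match n with 0 => cZero | S n => cComp cSucc (const_code n) end.
Lemma eval_const_code n x : eval (const_code n) x n.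
Proof. induction n; simpl; econstructor; eauto; constructor. Qed.
Definition index_const n := encode (const_code n).
Lemma computable_index_const : computable index_const.
Proof.
  assert (H : computable (fun z => prim_rec (fun _ => pair 0 0) (fun w => pair 5 (pair (pair 1 0) (pi2 (pi2 w)))) (pi1 z) (pi2 z))).
  { apply computable_prim_rec; computable_auto. }
  eapply computable_ext; [|apply (computable_comp _ (fun z => pair 0 z) H)].
  - intro z. cbv beta. simpl_pi. induction z; simpl; auto. simpl_pi. rewrite IHz. reflexivity.
  - computable_auto.
Qed.

Ltac search_computable_step := first [ computable_step
  | match goal with
    | |- computableb (fun z => is_axiom (@?f z)) => apply (computableb_comp is_axiom f computableb_is_axiom)
    | |- computableb (fun z => is_rule_instance (@?f z)) => apply (computableb_comp is_rule_instance f computableb_is_rule_instance)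
    | |- computable (fun z => index_const (@?f z)) => apply (computable_comp index_const f computable_index_const)
    end ].
Ltac search_computable_auto := repeat search_computable_step.

Section Search.
Variables (p e a cnA : nat).

(* A witness [w] packs guessed values [pi1 w] with a derivation sequence of length
   [pi1 (pi2 w)] and code [pi2 (pi2 w)].  For [x <> cnA] the search confirms that [x] is
   accepted by the program [e]; for [x = cnA] it looks for a value [b] of the program [p]
   at [n] and a context [g] of [W e]-sentences deriving the implication with code
   [pair 2 (pair b a)]. *)
Definition search_step n x w :=
  (negb (x =? cnA) && valid_seqb is_axiom is_rule_instance (pi1 (pi2 w)) (pi2 (pi2 w)) &&
    mem_seqb (judg 0 e x (pi1 w) 0 0) (pi1 (pi2 w)) (pi2 (pi2 w))) ||
  ((x =? cnA) && valid_seqb is_axiom is_rule_instance (pi1 (pi2 w)) (pi2 (pi2 w)) &&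
    mem_seqb (judg 0 p n (pi1 (pi1 w)) 0 0) (pi1 (pi2 w)) (pi2 (pi2 w)) &&
    mem_seqb (judg 8 e (pi2 (pi1 w)) 0 0 0) (pi1 (pi2 w)) (pi2 (pi2 w)) &&
    mem_seqb (judg 9 (pi2 (pi1 w)) (pair 2 (pair (pi1 (pi1 w)) a)) 0 0 0) (pi1 (pi2 w)) (pi2 (pi2 w))).

Definition search_char z := if search_step (pi1 (pi1 z)) (pi2 (pi1 z)) (pi2 z) then 0 else 1.

Lemma computable_search_char : computable search_char.
Proof.
  unfold search_char, search_step, valid_seqb, mem_seqb, rule_instance, judg, nth_code.
  search_computable_auto.
Qed.

Definition phi_imp_derivable n := exists b g, Deriv (judg 0 p n b 0 0) /\
  Deriv (judg 8 e g 0 0 0) /\ Deriv (judg 9 g (pair 2 (pair b a)) 0 0 0).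

Lemma search_step_spec n x : (exists w, search_step n x w = true) <->
  (x <> cnA /\ exists y, Deriv (judg 0 e x y 0 0)) \/ (x = cnA /\ phi_imp_derivable n).
Proof.
  split.
  - intros [w Hw]. unfold search_step in Hw. apply orb_true_iff in Hw.
    destruct Hw as [Hw|Hw]; destruct_bool.
    + left. split; auto. exists (pi1 w). eapply mem_seqb_Derivable; eauto.
    + right. split; auto. exists (pi1 (pi1 w)), (pi2 (pi1 w)).
      repeat split; eapply mem_seqb_Derivable; eauto.
  - intros [[Hx [y Hy]]|[Hx [b [g [D1 [D2 D3]]]]]].
    + destruct (Derivable_common_seq is_axiom is_rule_instance [judg 0 e x y 0 0]) as [l [V I]]; [intros f [<-|[]]; auto|].
      exists (pair y (pair (length l) (code_list l))). unfold search_step. simpl_pi.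
      rewrite valid_seq_valid_seqb, mem_seqb_code_list by (auto; apply I; simpl; auto).
      apply Nat.eqb_neq in Hx. rewrite Hx. reflexivity.
    + destruct (Derivable_common_seq is_axiom is_rule_instance [judg 0 p n b 0 0; judg 8 e g 0 0 0;
        judg 9 g (pair 2 (pair b a)) 0 0 0]) as [l [V I]]; [intros f [<-|[<-|[<-|[]]]]; auto|].
      exists (pair (pair b g) (pair (length l) (code_list l))). unfold search_step. simpl_pi.
      rewrite valid_seq_valid_seqb by auto.
      subst. rewrite Nat.eqb_refl. cbn [negb andb orb].
      rewrite !mem_seqb_code_list by (apply I; simpl; auto). reflexivity.
Qed.

End Search.

Lemma least_witness (P : nat -> bool) n : P n = true ->
  exists w, P w = true /\ forall m, m < w -> P m = false.
Proof.
  revert n. induction n as [n IH] using (well_founded_induction lt_wf). intro Hn.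
  destruct (bexists n P) eqn:E.
  - apply bexists_spec in E. destruct E as [m [Hm E]]. apply (IH m Hm E).
  - exists n. split; auto. intros m Hm. destruct (P m) eqn:Pm; auto.
    assert (bexists n P = true) by (apply bexists_spec; eauto). congruence.
Qed.

Lemma eval_mu_halts_iff K kf : (forall z, eval K z (kf z)) ->
  forall z, (exists y, eval (cMu K) z y) <-> exists w, kf (pair z w) = 0.
Proof.
  intros HK z. split.
  - intros [y Hy]. inversion Hy; subst. exists y. eapply eval_det; eauto.
  - intros [w Hw]. destruct (least_witness (fun w => kf (pair z w) =? 0) w) as [n [Hn Hl]].
    + apply Nat.eqb_eq; auto.
    + exists n. constructor.
      * apply Nat.eqb_eq in Hn. rewrite <- Hn. auto.
      * intros m Hm. exists (kf (pair z m)). split; auto. specialize (Hl m Hm).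
        apply Nat.eqb_neq in Hl. auto.
Qed.

(* [diag_index (encode M) a] is the code of [x |-> M <phi_a(a), x>]; fed its own index it is a
   fixed point. *)
Definition diag_index m a := pair 5 (pair m (pair 6 (pair (pair 5 (pair a (index_const a))) (encode cId)))).

Lemma recursion_theorem M : exists Cq, forall x y, eval Cq x y <-> eval M (pair (encode Cq) x) y.
Proof.
  destruct (ltac:(unfold diag_index; search_computable_auto) : computable (diag_index (encode M))) as [Dg HDg].
  set (a0 := encode Dg).
  exists (cComp M (cPair (cComp Dg (const_code a0)) cId)).
  change (encode (cComp M (cPair (cComp Dg (const_code a0)) cId))) with (diag_index (encode M) a0).
  intros x y. split.
  - intro H. inversion H; subst.
    match goal with Hp : eval (cPair _ _) _ _ |- _ => inversion Hp; subst end.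
    match goal with Hi : eval cId _ _ |- _ => inversion Hi; subst end.
    match goal with Hc : eval (cComp Dg (const_code a0)) _ ?a |- _ =>
      assert (a = diag_index (encode M) a0); [inversion Hc; subst|] end.
    { match goal with Hcc : eval (const_code a0) _ ?y1 |- _ =>
        assert (y1 = a0) by (eapply eval_det; [exact Hcc|apply eval_const_code]) end. subst.
      eapply eval_det; eauto. }
    subst. assumption.
  - intro H. econstructor; [|exact H]. constructor; [|constructor].
    econstructor; [apply eval_const_code|apply HDg].
Qed.

Lemma phi_encode C x y : phi (encode C) x y <-> eval C x y.
Proof.
  split.
  - intros [c [Hc H]]. apply encode_inj in Hc. subst. auto.
  - intro H. exists C. auto.
Qed.

Lemma W_encode C B : W (encode C) B <-> sentence B /\ exists y, eval C (fcode B) y.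
Proof. unfold W. split; intros [Hs [y Hy]]; split; auto; exists y; apply phi_encode; auto. Qed.

(* Indices that code no program are indices of the empty theory, as is the code of
   [x |-> least n with n + 1 = 0]. *)
Lemma exists_code_index (U : theory) : (exists e, same_theory (W e) U) ->
  exists C, same_theory (W (encode C)) U.
Proof.
  intros [e He]. destruct (classic (exists C, encode C = e)) as [[C <-]|N]; [exists C; auto|].
  exists (cMu cSucc). intro B. rewrite <- (He B), W_encode. unfold W. split.
  - intros [_ [y Hy]]. inversion Hy; subst.
    match goal with H : eval cSucc _ 0 |- _ => inversion H end.
  - intros [_ [y [c [Hc _]]]]. exfalso. apply N. eauto.
Qed.

Lemma phi_imp_derivable_iff (Cp Ce : code) (A : form) n :
  phi_imp_derivable (encode Cp) (encode Ce) (fcode A) n <->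
  exists B, eval Cp n (fcode B) /\ Provable (W (encode Ce)) (imp B A).
Proof.
  split.
  - intros [b [g [D1 [D2 D3]]]].
    apply Deriv_eval_iff in D1.
    destruct (Deriv_ctx_in_W_sound _ _ D2) as [G [<- HGW]].
    destruct (Deriv_nd_sound _ _ D3) as [G' [Y [HG' [HY Hnd]]]].
    apply code_ctx_inj in HG'. subst G'.
    destruct Y as [| | Y1 Y2 |]; cbn [fcode] in HY; inv_pair; try discriminate.
    match goal with H : fcode Y2 = fcode A |- _ => apply fcode_inj in H; subst Y2 end.
    exists Y1. split; [congruence|]. exists G. split; auto.
    intros B HB. destruct (HGW B HB) as [Hs [y Hy]]. apply W_encode. eauto.
  - intros [B [HB [G [HG Hnd]]]]. exists (fcode B), (code_ctx G). repeat split.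
    + apply Deriv_eval. exact HB.
    + apply Deriv_ctx_in_W. intros B' HB'. apply HG, W_encode in HB' as [Hs [y Hy]]. eauto.
    + apply (Deriv_nd _ _ Hnd).
Qed.

Lemma Provable_mono (T S : theory) X : (forall B, T B -> S B) -> Provable T X -> Provable S X.
Proof. intros HTS [G [HG Hnd]]. exists G. auto. Qed.

Lemma Provable_same_theory (T S : theory) X : same_theory T S -> Provable T X <-> Provable S X.
Proof. intro H. split; apply Provable_mono; apply H. Qed.

Lemma sentence_neg A : sentence A -> sentence (neg A).
Proof. unfold sentence, neg. simpl. intros ->. reflexivity. Qed.

Lemma diagonal_index (U : theory) (Cp : code) (A : form) :
  (exists e, same_theory (W e) U) -> sentence A ->
  exists j, forall C, W j C <-> (U C /\ C <> neg A) \/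
    (C = neg A /\ exists B, phi (encode Cp) j (fcode B) /\ Provable U (imp B A)).
Proof.
  intros HUce HA. destruct (exists_code_index U HUce) as [Ce He].
  set (search := search_step (encode Cp) (encode Ce) (fcode A) (fcode (neg A))).
  destruct (computable_search_char (encode Cp) (encode Ce) (fcode A) (fcode (neg A))) as [K HK].
  destruct (recursion_theorem (cMu K)) as [Cq HCq]. set (j := encode Cq).
  assert (Hdom : forall x, (exists y, phi j x y) <-> exists w, search j x w = true).
  { intro x. split.
    - intros [y Hy]. apply phi_encode, HCq in Hy.
      destruct (proj1 (eval_mu_halts_iff K _ HK _) (ex_intro _ y Hy)) as [w Hw].
      exists w. unfold search_char in Hw. rewrite !pi1_pair, !pi2_pair in Hw.
      unfold search. destruct search_step; [reflexivity|discriminate].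
    - intros [w Hw]. destruct (proj2 (eval_mu_halts_iff K _ HK (pair j x))) as [y Hy].
      + exists w. unfold search_char. simpl_pi. unfold search in Hw. rewrite Hw. reflexivity.
      + exists y. apply phi_encode, HCq. exact Hy. }
  exists j. intro C. unfold W at 1. rewrite Hdom. unfold search.
  rewrite search_step_spec, phi_imp_derivable_iff.
  setoid_rewrite Deriv_eval_iff. setoid_rewrite phi_encode.
  setoid_rewrite (Provable_same_theory _ _ _ He). rewrite <- (He C), W_encode.
  split.
  - intros [Hs [[Hx Hy]|[Hx HB]]]; [left|right]; split; auto.
    + intros ->. auto.
    + apply fcode_inj. auto.
  - intros [[[Hs Hy] Hx]|[-> HB]]; split; auto using sentence_neg.
    left. split; auto. intro E. apply fcode_inj in E. auto.
Qed.

Lemma nd_weaken G X : nd G X -> forall G', incl G G' -> nd G' X.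
Proof.
  induction 1; intros G' Hi.
  - apply nd_ax. auto.
  - apply nd_impI. apply IHnd. intros x [<-|Hx]; simpl; auto.
  - eapply nd_impE; eauto.
  - apply nd_allI. apply IHnd. apply incl_map. auto.
  - apply nd_allE. auto.
  - apply nd_raa. apply IHnd. intros x [<-|Hx]; simpl; auto.
  - apply nd_refl.
  - eapply nd_eqE; eauto.
Qed.

Lemma term_eq_dec (s t : term) : {s = t} + {s <> t}.
Proof. decide equality; apply Nat.eq_dec. Qed.

Lemma form_eq_dec (A B : form) : {A = B} + {A <> B}.
Proof. decide equality; apply term_eq_dec. Qed.

Lemma Consistent_of_extension_by_neg (U T : theory) (A : form) :
  (forall C, T C -> U C \/ C = neg A) -> ~ Provable U A -> Consistent T.
Proof.
  intros HT HUA [G [HG Hnd]]. apply HUA.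
  exists (filter (fun B => if form_eq_dec B (neg A) then false else true) G). split.
  - intros B HB. apply filter_In in HB as [HB Hf].
    destruct (form_eq_dec B (neg A)); [discriminate|].
    destruct (HT B (HG B HB)); [auto|contradiction].
  - apply nd_raa. eapply nd_weaken; [exact Hnd|]. intros B HB.
    destruct (form_eq_dec B (neg A)) as [->|Hn]; [left; auto|right].
    apply filter_In. split; auto. destruct (form_eq_dec B (neg A)); [contradiction|reflexivity].
Qed.

Lemma Provable_neg_of_imp (T : theory) A B : T (neg A) -> Provable T (imp B A) -> Provable T (neg B).
Proof.
  intros HnA [G [HG Hnd]]. exists (neg A :: G). split.
  - intros C [<-|HC]; auto.
  - apply nd_impI. apply (nd_impE _ A fal); [apply nd_ax; simpl; auto|].
    apply (nd_impE _ B A); [|apply nd_ax; simpl; auto].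
    eapply nd_weaken; [exact Hnd|]. intros C HC; simpl; auto.
Qed.

Lemma finite_extension_same_theory (T U : theory) : same_theory T U -> finite_extension T U.
Proof. intro H. exists []. split; [intros ? []|]. intro B. rewrite (H B). simpl. tauto. Qed.

Lemma Consistent_same_theory (T U : theory) : same_theory T U -> Consistent U -> Consistent T.
Proof. intros H HU HT. apply HU. revert HT. apply Provable_mono. apply H. Qed.

Section Diagonal.
Variables (U : theory) (p j : nat) (A : form).
Hypothesis sentence_A : sentence A.
Hypothesis U_not_A : ~ Provable U A.
Hypothesis W_j : forall C, W j C <-> (U C /\ C <> neg A) \/
  (C = neg A /\ exists B, phi p j (fcode B) /\ Provable U (imp B A)).
Hypothesis Phi_j : finite_extension (W j) U -> Consistent (W j) ->
  exists B, PhiVal p j B /\ ~ Provable U B /\ ~ Provable (W j) (neg B).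

(* Were [Phi(j) -> A] provable in [U], [W j] would be the consistent finite extension
   [U + neg A] of [U], refuting [Phi(j)]. *)
Lemma diagonal_not_provable : ~ exists B, phi p j (fcode B) /\ Provable U (imp B A).
Proof.
  intro Hprov. pose proof Hprov as [B [HB HBA]].
  assert (HWj : forall C, W j C <-> U C \/ C = neg A).
  { intro C. rewrite W_j. destruct (form_eq_dec C (neg A)); intuition. }
  assert (FE : finite_extension (W j) U).
  { exists [neg A]. split; [intros C [<-|[]]; auto using sentence_neg|].
    intro C. rewrite HWj. simpl. intuition. }
  assert (Con : Consistent (W j)).
  { apply (Consistent_of_extension_by_neg U (W j) A); [apply HWj|exact U_not_A]. }
  destruct (Phi_j FE Con) as [B' [[_ HB'] [_ HjB']]].
  assert (B' = B) as -> by (apply fcode_inj; eapply phi_functional; eauto).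
  apply HjB', (Provable_neg_of_imp _ A); [apply HWj; auto|].
  revert HBA. apply Provable_mono. intros C HC. apply HWj. auto.
Qed.

Hypothesis U_not_neg_A : ~ U (neg A).

Lemma diagonal_same_theory : same_theory (W j) U.
Proof.
  intro C. rewrite W_j. pose proof diagonal_not_provable. split.
  - intros [[HC _]|[_ Hprov]]; [auto|contradiction].
  - intro HC. left. split; auto. intros ->. auto.
Qed.

End Diagonal.

Theorem mainTheorem17 (U : theory) (p : nat)
  (HUce : exists e, same_theory (W e) U)
  (HUcon : Consistent U)
  (HPhi : forall i, finite_extension (W i) U -> Consistent (W i) ->
     exists A, PhiVal p i A /\ ~ Provable U A /\ ~ Provable (W i) (neg A)) :
  forall i, same_theory (W i) U ->
    exists j Aj Ai, same_theory (W j) U /\ PhiVal p j Aj /\ PhiVal p i Ai /\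
      ~ Provable U (imp Aj Ai).
Proof.
  assert (HPhiU : forall k, same_theory (W k) U ->
    exists A, PhiVal p k A /\ ~ Provable U A /\ ~ Provable (W k) (neg A)).
  { intros k Hk.
    apply HPhi; [apply finite_extension_same_theory | eapply Consistent_same_theory]; eauto. }
  intros i Hi. destruct (HPhiU i Hi) as [A [[HA [Cp [<- HCp]]] [HUA HiA]]].
  assert (HUnA : ~ U (neg A)).
  { intro HnA. apply HiA. exists [neg A]. split; [intros C [<-|[]]; apply Hi; auto|]. apply nd_ax.
    simpl. auto. }
  destruct (diagonal_index U Cp A HUce HA) as [j Hj].
  assert (Hjnot := diagonal_not_provable U (encode Cp) j A HA HUA Hj (HPhi j)).
  assert (HjU := diagonal_same_theory U (encode Cp) j A HA HUA Hj (HPhi j) HUnA).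
  destruct (HPhiU j HjU) as [B [HB _]].
  exists j, B, A. split; [exact HjU|]. split; [exact HB|]. split; [split; [exact HA|exists Cp; auto]|].
  intro HBA. apply Hjnot. exists B. split; [apply HB|exact HBA].
Qed.
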